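(* Let $\mathcal A$ be a $\mathcal{SHIQ}$-Abox (with all concepts in negation normal form) and $\mathcal R$ a role hierarchy. If $\mathcal A$ has a tableau w.r.t. $\mathcal R$, then the expansion rules of the completion algorithm can be applied to $\mathcal A$ and $\mathcal R$ such that they yield a complete and clash-free completion forest.
   Context: $\mathcal{SHIQ}$: roles are role names and inverses $R^-$ ($\mathrm{Inv}(R)=R^-$, $\mathrm{Inv}(S^-)=S$); some role names are transitive, $\mathrm{Trans}(R)$ iff $R$ or $\mathrm{Inv}(R)$ is a transitive role name. A role hierarchy $\mathcal R$ is a set of role inclusions $R\sqsubseteq S$; $\sqsubseteq^*$ is the reflexive-transitive closure of $\sqsubseteq$ over $\mathcal R\cup\{\mathrm{Inv}(R)\sqsubseteq\mathrm{Inv}(S)\mid R\sqsubseteq S\in\mathcal R\}$; a role is simple if neither transitive nor having a transitive sub-role. Concepts: concept names, $\sqcap,\sqcup,\neg$, $\forall R.C$, $\exists R.C$, $(\geqslant n\,S\,C)$, $(\leqslant n\,S\,C)$ ($S$ simple). An Abox is a finite set of assertions $a:C$, $(a,b):R$, $a\not\doteq b$. NNF: negation only before concept names; $\sim C$ is the NNF of $\neg C$ (with $\neg(\leqslant n\,R\,C)\equiv(\geqslant(n{+}1)\,R\,C)$, $\neg(\geqslant n\,R\,C)\equiv(\leqslant(n{-}1)\,R\,C)$, $(\leqslant(-1)\,R\,C):=A\sqcap\neg A$). $\mathsf{clos}(\mathcal A)$ is the union over $a:C\in\mathcal A$ of the smallest set containing $C$ closed under subconcepts and $\sim$. $\mathbf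 R_{\mathcal A}$: roles in $\mathcal A$ and $\mathcal R$ with their inverses; $\mathbf I_{\mathcal A}$: individuals in $\mathcal A$. Tableau: $T=(\mathbf S,\mathcal L,\mathcal E,\mathcal I)$ is a tableau for $\mathcal A$ w.r.t. $\mathcal R$ iff $\mathbf S\neq\emptyset$, $\mathcal L:\mathbf S\to2^{\mathsf{clos}(\mathcal A)}$, $\mathcal E:\mathbf R_{\mathcal A}\to2^{\mathbf S\times\mathbf S}$, $\mathcal I:\mathbf I_{\mathcal A}\to\mathbf S$, and for all $s,t\in\mathbf S$, $C,C_1,C_2\in\mathsf{clos}(\mathcal A)$, $R,S\in\mathbf R_{\mathcal A}$: (P1) $C\in\mathcal L(s)\Rightarrow\neg C\notin\mathcal L(s)$; (P2) $C_1\sqcap C_2\in\mathcal L(s)\Rightarrow C_1,C_2\in\mathcal L(s)$; (P3) $C_1\sqcup C_2\in\mathcal L(s)\Rightarrow C_1\in\mathcal L(s)$ or $C_2\in\mathcal L(s)$; (P4) $\forall S.C\in\mathcal L(s)$, $(s,t)\in\mathcal E(S)\Rightarrow C\in\mathcal L(t)$; (P5) $\exists S.C\in\mathcal L(s)\Rightarrow$ some $t$ with $(s,t)\in\mathcal E(S)$, $C\in\mathcal L(t)$; (P6) $\forall S.C\in\mathcal L(s)$, $(s,t)\in\mathcal E(R)$, $R\sqsubseteq^*S$, $\mathrm{Trans}(R)\Rightarrow\forall R.C\in\mathcal L(t)$; (P7) $(s,t)\in\mathcal E(R)$ iff $(t,s)\in\mathcal E(\mathrm{Inv}(R))$; (P8)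 $(s,t)\in\mathcal E(R)$, $R\sqsubseteq^*S\Rightarrow(s,t)\in\mathcal E(S)$; (P9) $(\leqslant n\,S\,C)\in\mathcal L(s)\Rightarrow\#S^T(s,C)\le n$; (P10) $(\geqslant n\,S\,C)\in\mathcal L(s)\Rightarrow\#S^T(s,C)\ge n$; (P11) $(\bowtie n\,S\,C)\in\mathcal L(s)$ ($\bowtie\in\{\leqslant,\geqslant\}$), $(s,t)\in\mathcal E(S)\Rightarrow C\in\mathcal L(t)$ or $\sim C\in\mathcal L(t)$; (P12) $a:C\in\mathcal A\Rightarrow C\in\mathcal L(\mathcal I(a))$; (P13) $(a,b):R\in\mathcal A\Rightarrow(\mathcal I(a),\mathcal I(b))\in\mathcal E(R)$; (P14) $a\not\doteq b\in\mathcal A\Rightarrow\mathcal I(a)\neq\mathcal I(b)$; where $S^T(s,C)=\{t\mid(s,t)\in\mathcal E(S), C\in\mathcal L(t)\}$. Completion forest: a collection of trees whose root nodes may be connected by edges arbitrarily; each node $x$ has a label $\mathcal L(x)\subseteq\mathsf{clos}(\mathcal A)$, each edge $\langle x,y\rangle$ a label $\mathcal L(\langle x,y\rangle)\subseteq\mathbf R_{\mathcal A}$; there are symmetric relations $\not\doteq$ and $\doteq$ on nodes. If $R\in\mathcal L(\langle x,y\rangle)$ and $R\sqsubseteq^*S$, then $y$ is an $S$-successor of $x$ and $x$ an $\mathrm{Inv}(S)$-predecessor of $y$; $y$ is an $S$-neighbour of $x$ if it is an $S$-successor or $\mathrm{Inv}(S)$-predecessor of $x$; successor/predecessor/neighbour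 means for some $S$; ancestor is the transitive closure of predecessor. $S^{\mathcal F}(x,C)=\{y\mid y$ an $S$-neighbour of $x$, $C\in\mathcal L(y)\}$. A node is blocked iff it is not a root and is directly or indirectly blocked. $x$ is directly blocked iff none of its ancestors is blocked and it has ancestors $x',y,y'$ with $y$ not a root, $x$ a successor of $x'$, $y$ a successor of $y'$, $\mathcal L(x)=\mathcal L(y)$, $\mathcal L(x')=\mathcal L(y')$, $\mathcal L(\langle x',x\rangle)=\mathcal L(\langle y',y\rangle)$ ($y$ blocks $x$). A node $y$ is indirectly blocked iff an ancestor is blocked or it is a successor of some $x$ with $\mathcal L(\langle x,y\rangle)=\emptyset$. Initial forest: one root $x^i$ per individual $a_i$ of $\mathcal A$ with $\mathcal L(x^i)=\{C\mid a_i:C\in\mathcal A\}$; an edge $\langle x^i,x^j\rangle$ labelled $\{R\mid(a_i,a_j):R\in\mathcal A\}$ whenever this set is nonempty; $x^i\not\doteq x^j$ iff $a_i\not\doteq a_j\in\mathcal A$; $\doteq$ empty. Expansion rules ($\bowtie\in\{\leqslant,\geqslant\}$): $\sqcap$: if $C_1\sqcap C_2\in\mathcal L(x)$, $x$ not indirectly blocked, $\{C_1,C_2\}\not\subseteq\mathcal L(x)$: add $C_1,C_2$. $\sqcup$: if $C_1\sqcup C_2\in\mathcal L(x)$, $x$ not indirectly blocked, $\{C_1,C_2\}\cap\mathcal L(x)=\emptyset$: add $C_1$ or $C_2$ (nondeterministic). $\exists$: if $\exists S.C\in\mathcal L(x)$, $x$ not blocked, no $S$-neighbour $y$ with $C\in\mathcal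 L(y)$: create new $y$ with $\mathcal L(\langle x,y\rangle)=\{S\}$, $\mathcal L(y)=\{C\}$. $\forall$: if $\forall S.C\in\mathcal L(x)$, $x$ not indirectly blocked, some $S$-neighbour $y$ with $C\notin\mathcal L(y)$: add $C$ to $\mathcal L(y)$. $\forall_+$: if $\forall S.C\in\mathcal L(x)$, $x$ not indirectly blocked, some $R$ with $\mathrm{Trans}(R)$, $R\sqsubseteq^*S$ and an $R$-neighbour $y$ with $\forall R.C\notin\mathcal L(y)$: add $\forall R.C$ to $\mathcal L(y)$. choose: if $(\bowtie n\,S\,C)\in\mathcal L(x)$, $x$ not indirectly blocked, some $S$-neighbour $y$ with $\{C,\sim C\}\cap\mathcal L(y)=\emptyset$: add $C$ or $\sim C$ to $\mathcal L(y)$. $\geqslant$: if $(\geqslant n\,S\,C)\in\mathcal L(x)$, $x$ not blocked, no $n$ $S$-neighbours $y_1,\dots,y_n$ with $C\in\mathcal L(y_i)$ and pairwise $y_i\not\doteq y_j$: create $n$ new nodes $y_i$ with $\mathcal L(\langle x,y_i\rangle)=\{S\}$, $\mathcal L(y_i)=\{C\}$, pairwise $y_i\not\doteq y_j$. $\leqslant$: if $(\leqslant n\,S\,C)\in\mathcal L(x)$, $x$ not indirectly blocked, $\#S^{\mathcal F}(x,C)>n$, and $S$-neighbours $y,z$ of $x$ with not $y\not\doteq z$, $y$ neither a root nor an ancestor of $z$, $C\in\mathcal L(y)\cap\mathcal L(z)$: (1) add $\mathcal L(y)$ to $\mathcal L(z)$; (2) if $z$ is an ancestor of $x$, add $\{\mathrm{Inv}(R)\mid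 R\in\mathcal L(\langle x,y\rangle)\}$ to $\mathcal L(\langle z,x\rangle)$, else add $\mathcal L(\langle x,y\rangle)$ to $\mathcal L(\langle x,z\rangle)$; (3) set $\mathcal L(\langle x,y\rangle)=\emptyset$; (4) set $u\not\doteq z$ for all $u$ with $u\not\doteq y$. $\leqslant_r$: if $(\leqslant n\,S\,C)\in\mathcal L(x)$, $\#S^{\mathcal F}(x,C)>n$, and two root $S$-neighbours $y,z$ of $x$ with $C\in\mathcal L(y)\cap\mathcal L(z)$ and not $y\not\doteq z$: (1) add $\mathcal L(y)$ to $\mathcal L(z)$; (2) for each edge $\langle y,w\rangle$, create $\langle z,w\rangle$ with empty label if absent and add $\mathcal L(\langle y,w\rangle)$ to it; (3) likewise each edge $\langle w,y\rangle$ into $\langle w,z\rangle$; (4) set $\mathcal L(y)=\emptyset$ and remove all edges to/from $y$; (5) set $u\not\doteq z$ for all $u$ with $u\not\doteq y$, and $y\doteq z$. Clash: $\{A,\neg A\}\subseteq\mathcal L(x)$ for a concept name $A$, or $(\leqslant n\,S\,C)\in\mathcal L(x)$ and $x$ has $n+1$ $S$-neighbours $y_0,\dots,y_n$ with $C\in\mathcal L(y_i)$ and pairwise $y_i\not\doteq y_j$. Clash-free: no node has a clash. Complete: no rule applicable. The completion algorithm starts from the initial forest and applies rules, stopping at a clash. *)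

From Stdlib Require Import List Relations.
Import ListNotations.

(** * Syntax *)

Inductive role : Type :=
| RN   (r : nat)
| RInv (r : nat).

Definition Inv (R : role) : role :=
  match R with RN r => RInv r | RInv r => RN r end.

Definition role_name (R : role) : nat :=
  match R with RN r => r | RInv r => r end.

Inductive concept : Type :=
| CName    (A : nat)
| CNot     (C : concept)
| CAnd     (C D : concept)
| COr      (C D : concept)
| CAll     (R : role) (C : concept)
| CEx      (R : role) (C : concept)
| CAtLeast (n : nat) (R : role) (C : concept)
| CAtMost  (n : nat) (R : role) (C : concept).

Inductive assertion : Type :=
| AConcept (a : nat) (C : concept)
| ARole    (a b : nat) (R : role)
| ANeq     (a b : nat).

Definition abox := list assertion.
Definition role_hierarchy := list (role * role).  (* (R,S) stands for R ⊑ S *)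

(* transitive role names are given by a predicate TN on role names;
   Trans(R) iff R or Inv(R) is a transitive role name *)
Definition Trans (TN : nat -> Prop) (R : role) : Prop := TN (role_name R).

Definition hier_step (H : role_hierarchy) (R S : role) : Prop :=
  In (R, S) H \/ In (Inv R, Inv S) H.

Definition sub_role (H : role_hierarchy) : role -> role -> Prop :=
  clos_refl_trans role (hier_step H).

Definition simple_role (TN : nat -> Prop) (H : role_hierarchy) (S : role) : Prop :=
  forall R, sub_role H R S -> ~ Trans TN R.

Fixpoint nnf (C : concept) : Prop :=
  match C with
  | CName _ => True
  | CNot D => match D with CName _ => True | _ => False end
  | CAnd C1 C2 | COr C1 C2 => nnf C1 /\ nnf C2
  | CAll _ D | CEx _ D | CAtLeast _ _ D | CAtMost _ _ D => nnf D
  end.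

Fixpoint nr_simple (TN : nat -> Prop) (H : role_hierarchy) (C : concept) : Prop :=
  match C with
  | CName _ => True
  | CNot D => nr_simple TN H D
  | CAnd C1 C2 | COr C1 C2 => nr_simple TN H C1 /\ nr_simple TN H C2
  | CAll _ D | CEx _ D => nr_simple TN H D
  | CAtLeast _ S0 D | CAtMost _ S0 D => simple_role TN H S0 /\ nr_simple TN H D
  end.

Definition abox_nnf (A : abox) : Prop :=
  forall a C, In (AConcept a C) A -> nnf C.

Definition abox_shiq (TN : nat -> Prop) (H : role_hierarchy) (A : abox) : Prop :=
  forall a C, In (AConcept a C) A -> nr_simple TN H C.

(* the fixed concept name used for (<= (-1) R C) := A ⊓ ¬A *)
Definition bottomC : concept := CAnd (CName 0) (CNot (CName 0)).

Fixpoint nnf_neg (C : concept) : concept :=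
  match C with
  | CName A => CNot (CName A)
  | CNot D => D
  | CAnd C1 C2 => COr (nnf_neg C1) (nnf_neg C2)
  | COr C1 C2 => CAnd (nnf_neg C1) (nnf_neg C2)
  | CAll R D => CEx R (nnf_neg D)
  | CEx R D => CAll R (nnf_neg D)
  | CAtMost n R D => CAtLeast (S n) R D
  | CAtLeast 0 R D => bottomC
  | CAtLeast (S n) R D => CAtMost n R D
  end.

Definition imm_sub (C D : concept) : Prop :=
  match C with
  | CName _ => False
  | CNot E => D = E
  | CAnd C1 C2 | COr C1 C2 => D = C1 \/ D = C2
  | CAll _ E | CEx _ E | CAtLeast _ _ E | CAtMost _ _ E => D = E
  end.

Inductive in_closure (C0 : concept) : concept -> Prop :=
| icl_base : in_closure C0 C0
| icl_sub  : forall C D, in_closure C0 C -> imm_sub C D -> in_closure C0 D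
| icl_neg  : forall C, in_closure C0 C -> in_closure C0 (nnf_neg C).

Definition clos (A : abox) (C : concept) : Prop :=
  exists a C0, In (AConcept a C0) A /\ in_closure C0 C.

Fixpoint role_in_concept (R : role) (C : concept) : Prop :=
  match C with
  | CName _ => False
  | CNot D => role_in_concept R D
  | CAnd C1 C2 | COr C1 C2 => role_in_concept R C1 \/ role_in_concept R C2
  | CAll S0 D | CEx S0 D | CAtLeast _ S0 D | CAtMost _ S0 D =>
      R = S0 \/ role_in_concept R D
  end.

Definition role_occurs (H : role_hierarchy) (A : abox) (R : role) : Prop :=
  (exists a C, In (AConcept a C) A /\ role_in_concept R C) \/
  (exists a b, In (ARole a b R) A) \/
  (exists S, In (R, S) H \/ In (S, R) H).

Definition in_RA (H : role_hierarchy) (A : abox) (R : role) : Prop :=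
  role_occurs H A R \/ role_occurs H A (Inv R).

Definition ind_in (A : abox) (a : nat) : Prop :=
  exists x, In x A /\
    match x with
    | AConcept b _ => a = b
    | ARole b c _ | ANeq b c => a = b \/ a = c
    end.

(** * Tableaux *)

Definition at_most {T : Type} (n : nat) (P : T -> Prop) : Prop :=
  exists l : list T, length l <= n /\ forall t, P t -> In t l.

Definition at_least {T : Type} (n : nat) (P : T -> Prop) : Prop :=
  exists l : list T, length l = n /\ NoDup l /\ forall t, In t l -> P t.

Definition is_tableau (TN : nat -> Prop) (H : role_hierarchy) (A : abox)
  (S : Type) (L : S -> concept -> Prop) (E : role -> S -> S -> Prop)
  (I : nat -> S) : Prop :=
  inhabited S /\
  (* L : S -> 2^clos(A) *)
  (forall s C, L s C -> clos A C) /\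
  (* E : R_A -> 2^(S x S) *)
  (forall R s t, E R s t -> in_RA H A R) /\
  (forall s C, L s C -> ~ L s (CNot C)) /\
  (forall s C1 C2, L s (CAnd C1 C2) -> L s C1 /\ L s C2) /\
  (forall s C1 C2, L s (COr C1 C2) -> L s C1 \/ L s C2) /\
  (forall s t S0 C, L s (CAll S0 C) -> E S0 s t -> L t C) /\
  (forall s S0 C, L s (CEx S0 C) -> exists t, E S0 s t /\ L t C) /\
  (forall s t R S0 C, L s (CAll S0 C) -> in_RA H A R -> E R s t ->
              sub_role H R S0 -> Trans TN R -> L t (CAll R C)) /\
  (forall s t R, in_RA H A R -> (E R s t <-> E (Inv R) t s)) /\
  (forall s t R S0, in_RA H A S0 -> E R s t -> sub_role H R S0 ->
              E S0 s t) /\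
  (forall s n S0 C, L s (CAtMost n S0 C) ->
              at_most n (fun t => E S0 s t /\ L t C)) /\
  (forall s n S0 C, L s (CAtLeast n S0 C) ->
              at_least n (fun t => E S0 s t /\ L t C)) /\
  (forall s t n S0 C,
              (L s (CAtMost n S0 C) \/ L s (CAtLeast n S0 C)) -> E S0 s t ->
              L t C \/ L t (nnf_neg C)) /\
  (forall a C, In (AConcept a C) A -> L (I a) C) /\
  (forall a b R, In (ARole a b R) A -> E R (I a) (I b)) /\
  (forall a b, In (ANeq a b) A -> I a <> I b).

Definition has_tableau (TN : nat -> Prop) (H : role_hierarchy) (A : abox) : Prop :=
  exists (S : Type) (L : S -> concept -> Prop) (E : role -> S -> S -> Prop)
         (I : nat -> S), is_tableau TN H A S L E I.

(** * Completion forests *)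

(* Nodes are natural numbers.  An edge <x,y> may exist with an empty label. *)
Record forest : Type := MkForest {
  f_node : nat -> Prop;
  f_root : nat -> Prop;
  f_lab  : nat -> concept -> Prop;
  f_edge : nat -> nat -> Prop;
  f_elab : nat -> nat -> role -> Prop;
  f_neq  : nat -> nat -> Prop;
  f_eq   : nat -> nat -> Prop
}.

Section ForestNotions.
Variable TN : nat -> Prop.
Variable H : role_hierarchy.
Variable F : forest.

Definition S_succ (S0 : role) (x y : nat) : Prop :=
  exists R, f_elab F x y R /\ sub_role H R S0.

Definition S_nbr (S0 : role) (x y : nat) : Prop :=
  S_succ S0 x y \/ S_succ (Inv S0) y x.

Definition ancestor (a x : nat) : Prop := clos_trans nat (f_edge F) a x.

Definition lab_eq (x y : nat) : Prop := forall C, f_lab F x C <-> f_lab F y C.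
Definition elab_eq (x' x y' y : nat) : Prop :=
  forall R, f_elab F x' x R <-> f_elab F y' y R.

(* the pairwise-label condition of direct blocking (without the requirement
   that no ancestor is blocked) *)
Definition block_cond (x : nat) : Prop :=
  exists x' y y', ancestor x' x /\ ancestor y x /\ ancestor y' x /\
    ~ f_root F y /\ f_edge F x' x /\ f_edge F y' y /\
    lab_eq x y /\ lab_eq x' y' /\ elab_eq x' x y' y.

Definition empty_in (x : nat) : Prop :=
  exists p, f_edge F p x /\ forall R, ~ f_elab F p x R.

(* the (unique, on finite forests) solution of the mutually recursive
   definition of blocking, unfolded along the ancestor chain *)
Definition blocked_sol (x : nat) : Prop :=
  ~ f_root F x /\
  exists z, (z = x \/ ancestor z x) /\ ~ f_root F z /\
            (block_cond z \/ empty_in z).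

Definition directly_blocked (x : nat) : Prop :=
  (forall a, ancestor a x -> ~ blocked_sol a) /\ block_cond x.

Definition indirectly_blocked (x : nat) : Prop :=
  (exists a, ancestor a x /\ blocked_sol a) \/ empty_in x.

Definition blocked (x : nat) : Prop :=
  ~ f_root F x /\ (directly_blocked x \/ indirectly_blocked x).

Definition card_gt (n : nat) (P : nat -> Prop) : Prop :=
  exists l, NoDup l /\ length l = S n /\ forall y, In y l -> P y.

Definition clash_at (x : nat) : Prop :=
  (exists A0, f_lab F x (CName A0) /\ f_lab F x (CNot (CName A0))) \/
  (exists n S0 C, f_lab F x (CAtMost n S0 C) /\
     exists l, length l = S n /\ ForallOrdPairs (f_neq F) l /\
       forall y, In y l -> S_nbr S0 x y /\ f_lab F y C).

Definition clash_free : Prop := forall x, ~ clash_at x.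

End ForestNotions.

Definition add_labels (F : forest) (x : nat) (P : concept -> Prop) : forest :=
  MkForest (f_node F) (f_root F)
    (fun u D => f_lab F u D \/ (u = x /\ P D))
    (f_edge F) (f_elab F) (f_neq F) (f_eq F).

Definition add_label (F : forest) (x : nat) (C : concept) : forest :=
  add_labels F x (fun D => D = C).

Definition new_succs (F : forest) (x : nat) (ys : list nat) (S0 : role)
  (C : concept) (pw : bool) : forest :=
  MkForest
    (fun u => f_node F u \/ In u ys)
    (f_root F)
    (fun u D => f_lab F u D \/ (In u ys /\ D = C))
    (fun u v => f_edge F u v \/ (u = x /\ In v ys))
    (fun u v R => f_elab F u v R \/ (u = x /\ In v ys /\ R = S0))
    (fun u v => f_neq F u v \/
                (if pw then In u ys /\ In v ys /\ u <> v else False))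
    (f_eq F).

Definition fresh (F : forest) (y : nat) : Prop := ~ f_node F y.

Definition init_forest (A : abox) : forest :=
  MkForest
    (ind_in A)
    (ind_in A)
    (fun x C => In (AConcept x C) A)
    (fun x y => exists R, In (ARole x y R) A)
    (fun x y R => In (ARole x y R) A)
    (fun x y => In (ANeq x y) A \/ In (ANeq y x) A)
    (fun _ _ => False).

(** * Expansion rules *)

Section Rules.
Variable TN : nat -> Prop.
Variable H : role_hierarchy.

Inductive rule_step (F : forest) : forest -> Prop :=
| r_and : forall x C1 C2,
    f_lab F x (CAnd C1 C2) -> ~ indirectly_blocked F x ->
    ~ (f_lab F x C1 /\ f_lab F x C2) ->
    rule_step F (add_labels F x (fun D => D = C1 \/ D = C2))
| r_or : forall x C1 C2 D,
    f_lab F x (COr C1 C2) -> ~ indirectly_blocked F x ->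
    ~ f_lab F x C1 -> ~ f_lab F x C2 -> (D = C1 \/ D = C2) ->
    rule_step F (add_label F x D)
| r_ex : forall x S0 C y,
    f_lab F x (CEx S0 C) -> ~ blocked F x ->
    ~ (exists z, S_nbr H F S0 x z /\ f_lab F z C) ->
    fresh F y ->
    rule_step F (new_succs F x [y] S0 C false)
| r_all : forall x S0 C y,
    f_lab F x (CAll S0 C) -> ~ indirectly_blocked F x ->
    S_nbr H F S0 x y -> ~ f_lab F y C ->
    rule_step F (add_label F y C)
| r_allplus : forall x S0 C R y,
    f_lab F x (CAll S0 C) -> ~ indirectly_blocked F x ->
    Trans TN R -> sub_role H R S0 -> S_nbr H F R x y ->
    ~ f_lab F y (CAll R C) ->
    rule_step F (add_label F y (CAll R C))
| r_choose : forall x n S0 C y D,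
    (f_lab F x (CAtMost n S0 C) \/ f_lab F x (CAtLeast n S0 C)) ->
    ~ indirectly_blocked F x ->
    S_nbr H F S0 x y -> ~ f_lab F y C -> ~ f_lab F y (nnf_neg C) ->
    (D = C \/ D = nnf_neg C) ->
    rule_step F (add_label F y D)
| r_ge : forall x n S0 C ys,
    f_lab F x (CAtLeast n S0 C) -> ~ blocked F x ->
    ~ (exists l, length l = n /\ ForallOrdPairs (f_neq F) l /\
         forall y, In y l -> S_nbr H F S0 x y /\ f_lab F y C) ->
    length ys = n -> NoDup ys -> (forall y, In y ys -> fresh F y) ->
    rule_step F (new_succs F x ys S0 C true)
| r_le : forall x n S0 C y z,
    f_lab F x (CAtMost n S0 C) -> ~ indirectly_blocked F x ->
    card_gt n (fun w => S_nbr H F S0 x w /\ f_lab F w C) ->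
    S_nbr H F S0 x y -> S_nbr H F S0 x z -> y <> z ->
    ~ f_neq F y z -> ~ f_root F y -> ~ ancestor F y z ->
    f_lab F y C -> f_lab F z C ->
    rule_step F
      (MkForest
         (f_node F) (f_root F)
         (fun u D => f_lab F u D \/ (u = z /\ f_lab F y D))
         (fun u v => f_edge F u v \/ (ancestor F z x /\ u = z /\ v = x))
         (fun u v R =>
            (f_elab F u v R /\ ~ (u = x /\ v = y)) \/
            (ancestor F z x /\ u = z /\ v = x /\
               exists R', f_elab F x y R' /\ R = Inv R') \/
            (~ ancestor F z x /\ u = x /\ v = z /\ f_elab F x y R))
         (fun u v => f_neq F u v \/ (v = z /\ f_neq F u y) \/
                     (u = z /\ f_neq F v y))
         (f_eq F))
| r_ler : forall x n S0 C y z,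
    f_lab F x (CAtMost n S0 C) ->
    card_gt n (fun w => S_nbr H F S0 x w /\ f_lab F w C) ->
    S_nbr H F S0 x y -> S_nbr H F S0 x z -> y <> z ->
    f_root F y -> f_root F z ->
    f_lab F y C -> f_lab F z C -> ~ f_neq F y z ->
    rule_step F
      (MkForest
         (f_node F) (f_root F)
         (fun u D => (f_lab F u D \/ (u = z /\ f_lab F y D)) /\ u <> y)
         (* (2) edges <y,w> copied to <z,w>; then (3) edges <w,y> copied to
            <w,z> (edges after step (2)); (4) all edges to/from y removed *)
         (fun u v =>
            ((f_edge F u v \/ (u = z /\ f_edge F y v)) \/
             (v = z /\ (f_edge F u y \/ (u = z /\ f_edge F y y))))
            /\ u <> y /\ v <> y)
         (fun u v R =>
            ((f_elab F u v R \/ (u = z /\ f_elab F y v R)) \/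
             (v = z /\ (f_elab F u y R \/ (u = z /\ f_elab F y y R))))
            /\ u <> y /\ v <> y)
         (fun u v => f_neq F u v \/ (v = z /\ f_neq F u y) \/
                     (u = z /\ f_neq F v y))
         (fun u v => f_eq F u v \/ (u = y /\ v = z) \/ (u = z /\ v = y))).

(* the algorithm stops at a clash: rules are only applied to clash-free forests *)
Definition alg_step (F F' : forest) : Prop := clash_free H F /\ rule_step F F'.

Definition alg_run : forest -> forest -> Prop := clos_refl_trans forest alg_step.

Definition complete (F : forest) : Prop := ~ exists F', rule_step F F'.

End Rules.

(* The algorithm is run guided by the tableau.  Each forest node x is mapped to a tableau
   element π(x) so that L(x) ⊆ L(π(x)), an edge labelled R is mapped into E(R), and x ≠̇ y
   forces π(x) ≠ π(y); then no node has a clash (P1, P9).  Whenever some rule is applicable,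
   some application of a rule preserves this map: nondeterministic choices are read off the
   tableau (P3, P5, P10, P11), and when a ≤-rule applies, P9 and the pigeonhole principle give
   two neighbours with the same image, which can be merged.  Such steps decrease the vector
   (roots not merged away; for each depth d, the unused capacity of the nodes at depth d) in
   a well-founded order: labels lie in the finite set clos(A), merging fills a node up, new
   nodes are one level deeper, and depths stay bounded because on an ancestor chain longer
   than the number of possible label triples two nodes repeat a triple, which blocks. *)

From Stdlib Require Import List Relations Lia Arith Classical ClassicalEpsilon Wellfounded.
Import ListNotations.

(** * Finiteness of clos(A) and R_A *)

Fixpoint subconcepts (C : concept) : list concept :=
  C :: match C with
       | CName _ => []
       | CNot D => subconcepts D
       | CAnd C1 C2 | COr C1 C2 => subconcepts C1 ++ subconcepts C2
       | CAll _ D | CEx _ D | CAtLeast _ _ D | CAtMost _ _ D => subconcepts D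
       end.

Lemma subconcepts_refl C : In C (subconcepts C).
Proof. destruct C; simpl; auto. Qed.

Lemma subconcepts_trans C0 C D :
  In C (subconcepts C0) -> In D (subconcepts C) -> In D (subconcepts C0).
Proof.
  revert C; induction C0; simpl; intros C [<-|HC] HD; auto;
    try rewrite in_app_iff in *; firstorder.
Qed.

Lemma imm_sub_subconcepts C D : imm_sub C D -> In D (subconcepts C).
Proof.
  destruct C; simpl; intros HD; try contradiction;
    try destruct HD; subst; right; rewrite ?in_app_iff; auto using subconcepts_refl.
Qed.

Lemma subconcepts_nnf C0 C : nnf C0 -> In C (subconcepts C0) -> nnf C.
Proof.
  revert C; induction C0; simpl; intros C Hn [<-|HC]; auto;
    try (destruct C0; contradiction || (destruct HC as [<-|[]]; exact I));
    try rewrite in_app_iff in HC; firstorder.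
Qed.

Lemma nnf_neg_triple C : nnf C -> nnf_neg (nnf_neg (nnf_neg C)) = nnf_neg C.
Proof.
  induction C; simpl; intros Hn; auto;
    try (destruct Hn; rewrite IHC1, IHC2 by auto; auto; fail);
    try (rewrite IHC by auto; auto; fail).
  - destruct C; try contradiction; reflexivity.
  - destruct n; reflexivity.
Qed.

Definition bottom_literals : list concept := [CName 0; CNot (CName 0)].

Lemma bottom_literals_nnf_neg X : In X bottom_literals -> In (nnf_neg X) bottom_literals.
Proof. simpl; intros [<-|[<-|[]]]; simpl; auto. Qed.

Lemma bottom_literals_subconcepts X D :
  In X bottom_literals -> In D (subconcepts X) -> In D bottom_literals.
Proof. simpl; intros [<-|[<-|[]]]; simpl; tauto. Qed.

Lemma subconcepts_nnf_neg C D :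
  In D (subconcepts (nnf_neg C)) ->
  In D (subconcepts C) \/ (exists E, In E (subconcepts C) /\ D = nnf_neg E) \/
  In D bottom_literals.
Proof.
  revert D; induction C as [a|C IHC|C1 IHC1 C2 IHC2|C1 IHC1 C2 IHC2|R C IHC|R C IHC
                           |[|n] R C IHC|n R C IHC]; intros D HD.
  2: simpl; auto.
  all: simpl in HD |- *; destruct HD as [<-|HD].
  all: try (right; left; eexists; split; [left; reflexivity | reflexivity]).
  all: rewrite ?in_app_iff in HD; try tauto.
  all: try destruct HD as [HD|HD].
  all: repeat match goal with
       | IH : forall D, In D (subconcepts (nnf_neg ?C)) -> _,
         h : In _ (subconcepts (nnf_neg ?C)) |- _ =>
           destruct (IH _ h) as [?|[[? [? ->]]|?]]; clear h
       end.
  all: rewrite ?in_app_iff; try tauto.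
  all: right; left; eexists; split; [right; rewrite ?in_app_iff; eauto | reflexivity].
Qed.

(* [~~C] need not be [C]: [~(>= 0 R C)] is [bottomC = A0 ⊓ ¬A0] (with [A0 = CName 0]),
   whose [~] is [¬A0 ⊔ A0].  But [~~~C = ~C], and the two literals are the subconcepts of
   [bottomC]. *)
Definition closure_list (C0 : concept) : list concept :=
  subconcepts C0 ++ map nnf_neg (subconcepts C0)
  ++ map (fun C => nnf_neg (nnf_neg C)) (subconcepts C0) ++ bottom_literals.

Lemma in_closure_list_iff C0 X :
  In X (closure_list C0) <->
  In X bottom_literals \/
  exists Y, In Y (subconcepts C0) /\ (X = Y \/ X = nnf_neg Y \/ X = nnf_neg (nnf_neg Y)).
Proof.
  unfold closure_list; rewrite !in_app_iff, !in_map_iff.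
  split.
  - intros [h|[[Y [HY h]]|[[Y [HY h]]|h]]]; subst; eauto 6.
  - intros [h|[Y [h [-> | [-> | ->]]]]]; eauto 6.
Qed.

Lemma closure_list_subconcepts C0 X D :
  In X (closure_list C0) -> In D (subconcepts X) -> In D (closure_list C0).
Proof.
  rewrite !in_closure_list_iff; intros HX HD.
  assert (Hwit : forall Y Z, In Y (subconcepts C0) -> In Z (subconcepts Y) ->
            D = Z \/ D = nnf_neg Z \/ D = nnf_neg (nnf_neg Z) ->
            exists Y, In Y (subconcepts C0) /\
              (D = Y \/ D = nnf_neg Y \/ D = nnf_neg (nnf_neg Y)))
    by (intros; eexists; split; [eapply subconcepts_trans|]; eauto).
  destruct HX as [HX|[Y [HY [-> | [-> | ->]]]]].
  - left; eapply bottom_literals_subconcepts; eauto.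
  - eauto.
  - destruct (subconcepts_nnf_neg _ _ HD) as [h|[[E [h ->]]|h]]; eauto.
  - destruct (subconcepts_nnf_neg _ _ HD) as [h|[[E [h ->]]|h]]; auto.
    + destruct (subconcepts_nnf_neg _ _ h) as [h'|[[E [h' ->]]|h']]; eauto.
    + destruct (subconcepts_nnf_neg _ _ h) as [h'|[[E' [h' ->]]|h']]; eauto.
      left; apply bottom_literals_nnf_neg; auto.
Qed.

Lemma closure_list_nnf_neg C0 X :
  nnf C0 -> In X (closure_list C0) -> In (nnf_neg X) (closure_list C0).
Proof.
  rewrite !in_closure_list_iff; intros Hn [HX|[Y [HY [-> | [-> | ->]]]]].
  - left; apply bottom_literals_nnf_neg; auto.
  - eauto 6.
  - eauto 6.
  - rewrite nnf_neg_triple by (eapply subconcepts_nnf; eauto); eauto 6.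
Qed.

Lemma in_closure_closure_list C0 C : nnf C0 -> in_closure C0 C -> In C (closure_list C0).
Proof.
  intros Hn Hc; induction Hc.
  - apply in_closure_list_iff; right; exists C0; split; auto using subconcepts_refl.
  - eapply closure_list_subconcepts; eauto using imm_sub_subconcepts.
  - apply closure_list_nnf_neg; auto.
Qed.

Definition abox_closure_list (A : abox) : list concept :=
  flat_map (fun x => match x with AConcept _ C => closure_list C | _ => [] end) A.

Lemma clos_abox_closure_list A C : abox_nnf A -> clos A C -> In C (abox_closure_list A).
Proof.
  intros Hn [a [C0 [HA Hc]]]; apply in_flat_map.
  exists (AConcept a C0); split; auto; apply in_closure_closure_list; eauto.
Qed.

Fixpoint concept_roles (C : concept) : list role :=
  match C with
  | CName _ => []
  | CNot D => concept_roles D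
  | CAnd C1 C2 | COr C1 C2 => concept_roles C1 ++ concept_roles C2
  | CAll S0 D | CEx S0 D | CAtLeast _ S0 D | CAtMost _ S0 D => S0 :: concept_roles D
  end.

Lemma role_in_concept_roles R C : role_in_concept R C -> In R (concept_roles C).
Proof. induction C; simpl; rewrite ?in_app_iff; intros; intuition. Qed.

Definition occurring_roles (H : role_hierarchy) (A : abox) : list role :=
  flat_map (fun x => match x with
                     | AConcept _ C => concept_roles C
                     | ARole _ _ R => [R]
                     | ANeq _ _ => []
                     end) A
  ++ flat_map (fun p => [fst p; snd p]) H.

Definition role_list (H : role_hierarchy) (A : abox) : list role :=
  occurring_roles H A ++ map Inv (occurring_roles H A).

Lemma Inv_involutive R : Inv (Inv R) = R.
Proof. destruct R; reflexivity. Qed.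

Lemma role_occurs_occurring_roles H A R : role_occurs H A R -> In R (occurring_roles H A).
Proof.
  unfold occurring_roles; rewrite in_app_iff, !in_flat_map.
  intros [[a [C [HA HC]]]|[[a [b HA]]|[S0 [HS|HS]]]].
  - left; exists (AConcept a C); auto using role_in_concept_roles.
  - left; exists (ARole a b R); simpl; auto.
  - right; exists (R, S0); simpl; auto.
  - right; exists (S0, R); simpl; auto.
Qed.

Lemma in_RA_role_list H A R : in_RA H A R -> In R (role_list H A).
Proof.
  unfold role_list; rewrite in_app_iff.
  intros [Ho|Ho]; apply role_occurs_occurring_roles in Ho; auto.
  right; rewrite <- (Inv_involutive R); apply in_map; auto.
Qed.

Definition abox_individuals (A : abox) : list nat :=
  flat_map (fun x => match x with
                     | AConcept b _ => [b]
                     | ARole b c _ | ANeq b c => [b; c]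
                     end) A.

Lemma ind_in_abox_individuals A a : ind_in A a <-> In a (abox_individuals A).
Proof.
  unfold ind_in, abox_individuals; rewrite in_flat_map.
  split; intros [x [Hx Ha]]; exists x; split; auto; destruct x; simpl in *; intuition congruence.
Qed.

Lemma sub_role_Inv H R S0 : sub_role H R S0 -> sub_role H (Inv R) (Inv S0).
Proof.
  induction 1 as [R S0 [h|h]| |]; [apply rt_step..|apply rt_refl|eapply rt_trans; eauto].
  - right; rewrite !Inv_involutive; auto.
  - left; auto.
Qed.

Lemma in_RA_sub_role H A R S0 : sub_role H R S0 -> in_RA H A S0 -> in_RA H A R.
Proof.
  intros Hs Hra; apply clos_rt_rt1n in Hs; destruct Hs as [|S' ? [h|h] _]; auto.
  - left; right; right; exists S'; auto.
  - right; right; right; exists (Inv S'); auto.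
Qed.

Lemma role_in_concept_nnf_neg R C : role_in_concept R (nnf_neg C) -> role_in_concept R C.
Proof. induction C as [| | | | | |[|n]|]; simpl; tauto. Qed.

Lemma role_in_concept_in_closure C0 C R :
  in_closure C0 C -> role_in_concept R C -> role_in_concept R C0.
Proof.
  induction 1 as [|C D _ IH Hs|C _ IH]; intros Hr; auto.
  - apply IH; destruct C; simpl in *; try contradiction;
      repeat match goal with h : _ \/ _ |- _ => destruct h end; subst; tauto.
  - apply IH, role_in_concept_nnf_neg; auto.
Qed.

(** * Counting, and a well-founded order on vectors *)

Definition classic_bool (P : Prop) : bool :=
  if excluded_middle_informative P then true else false.

Lemma classic_bool_spec P : reflect P (classic_bool P).
Proof. unfold classic_bool; destruct (excluded_middle_informative P); constructor; auto. Qed.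

Definition count_sat {T : Type} (P : T -> Prop) (l : list T) : nat :=
  length (filter (fun c => classic_bool (P c)) l).

Lemma count_sat_le_length {T} (P : T -> Prop) l : count_sat P l <= length l.
Proof. apply filter_length_le. Qed.

Lemma count_sat_mono {T} (P Q : T -> Prop) l :
  (forall x, In x l -> P x -> Q x) -> count_sat P l <= count_sat Q l.
Proof.
  unfold count_sat; induction l as [|a l IH]; simpl; intros Hpq; auto.
  specialize (IH (fun x h => Hpq x (or_intror h))).
  destruct (classic_bool_spec (P a)) as [Pa|], (classic_bool_spec (Q a)) as [|nQa];
    simpl; try lia.
  exfalso; apply nQa, Hpq; simpl; auto.
Qed.

Lemma count_sat_lt {T} (P Q : T -> Prop) l :
  (forall x, In x l -> P x -> Q x) -> (exists x, In x l /\ Q x /\ ~ P x) ->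
  count_sat P l < count_sat Q l.
Proof.
  intros Hpq [x [Hx [HQ HP]]].
  induction l as [|a l IH]; [destruct Hx|].
  pose proof (count_sat_mono P Q l (fun y h => Hpq y (or_intror h))) as Hle.
  unfold count_sat in *; simpl.
  destruct Hx as [->|Hx].
  - destruct (classic_bool_spec (P x)), (classic_bool_spec (Q x)); simpl; try lia; tauto.
  - specialize (IH (fun y h => Hpq y (or_intror h)) Hx).
    destruct (classic_bool_spec (P a)) as [Pa|], (classic_bool_spec (Q a)) as [|nQa];
      simpl; try lia.
    exfalso; apply nQa, Hpq; simpl; auto.
Qed.

Definition bitvector {T : Type} (P : T -> Prop) (l : list T) : list bool :=
  map (fun c => classic_bool (P c)) l.

Fixpoint all_bitvectors (n : nat) : list (list bool) :=
  match n with
  | 0 => [[]]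
  | S n => map (cons true) (all_bitvectors n) ++ map (cons false) (all_bitvectors n)
  end.

Lemma all_bitvectors_complete (b : list bool) : In b (all_bitvectors (length b)).
Proof.
  induction b as [|[] b IH]; simpl; rewrite ?in_app_iff; auto using in_map.
Qed.

Lemma bitvector_in_all_bitvectors {T} (P : T -> Prop) l :
  In (bitvector P l) (all_bitvectors (length l)).
Proof. rewrite <- (length_map (fun c => classic_bool (P c)) l); apply all_bitvectors_complete. Qed.

Lemma bitvector_inj {T} (P Q : T -> Prop) l :
  bitvector P l = bitvector Q l -> forall c, In c l -> (P c <-> Q c).
Proof.
  induction l as [|a l IH]; simpl; intros Heq c Hc; [destruct Hc|].
  injection Heq as Ha Hl; destruct Hc as [<-|Hc]; auto.
  destruct (classic_bool_spec (P a)), (classic_bool_spec (Q a)); try discriminate; tauto.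
Qed.

(* A weakening of the lexicographic order on the first [K] coordinates, still well founded. *)
Definition vec_lt (K : nat) (f g : nat -> nat) : Prop :=
  exists d, d < K /\ f d < g d /\ forall d', d' < d -> f d' <= g d'.

Lemma vec_lt_wf K : well_founded (vec_lt K).
Proof.
  induction K as [|K IHK]; intros g.
  - constructor; intros f [d [Hd _]]; lia.
  - assert (Hacc : forall n h, Acc (vec_lt K) h ->
              forall g, g 0 = n -> (forall d, g (S d) = h d) -> Acc (vec_lt (S K)) g).
    { intros n; induction n as [n IHn] using lt_wf_ind.
      intros h Hh; induction Hh as [h _ IHh]; intros g0 Hg0 Hgh.
      constructor; intros f [d [Hd [Hlt Hle]]].
      assert (Hhead : f 0 < n \/ f 0 = n) by (destruct d; [|specialize (Hle 0)]; lia).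
      destruct Hhead as [Hhead|Hhead].
      - eapply IHn; [exact Hhead | apply (IHK (fun d => f (S d))) | reflexivity | reflexivity].
      - destruct d as [|d]; [lia|].
        apply (IHh (fun d => f (S d))); auto.
        exists d; rewrite <- !Hgh; split; [lia|]; split; auto.
        intros d' Hd'; rewrite <- Hgh; apply Hle; lia. }
    eapply Hacc; [apply (IHK (fun d => g (S d))) | reflexivity | reflexivity].
Qed.

Lemma map_not_NoDup {X Y : Type} (f : X -> Y) l :
  NoDup l -> ~ NoDup (map f l) -> exists a b, In a l /\ In b l /\ a <> b /\ f a = f b.
Proof.
  induction l as [|a l IH]; simpl; intros Hnd Hn.
  - exfalso; apply Hn; constructor.
  - inversion Hnd as [|? ? Ha Hl]; subst.
    destruct (classic (In (f a) (map f l))) as [Hin|Hin].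
    + apply in_map_iff in Hin; destruct Hin as [b [Hb Hbl]].
      exists a, b; repeat split; auto; congruence.
    + destruct (classic (NoDup (map f l))) as [Hnd2|Hnd2].
      * exfalso; apply Hn; constructor; auto.
      * destruct (IH Hl Hnd2) as (x & y & ? & ? & ? & ?); exists x, y; auto.
Qed.

Lemma ForallOrdPairs_map {X Y : Type} (R : X -> X -> Prop) (R' : Y -> Y -> Prop) (f : X -> Y) l :
  ForallOrdPairs R l -> (forall u v, In u l -> In v l -> R u v -> R' (f u) (f v)) ->
  ForallOrdPairs R' (map f l).
Proof.
  induction 1 as [|a l Ha Hl IH]; simpl; intros Hr; constructor.
  - rewrite Forall_forall in *; intros y Hy; apply in_map_iff in Hy.
    destruct Hy as [b [<- Hb]]; apply Hr; simpl; auto.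
  - apply IH; intros; apply Hr; simpl; auto.
Qed.

Lemma ForallOrdPairs_impl {X : Type} (R R' : X -> X -> Prop) l :
  (forall u v, In u l -> In v l -> R u v -> R' u v) ->
  ForallOrdPairs R l -> ForallOrdPairs R' l.
Proof. intros Hr Hl; rewrite <- (map_id l); eapply ForallOrdPairs_map; eauto. Qed.

Lemma ForallOrdPairs_NoDup_map {X Y : Type} (R : X -> X -> Prop) (f : X -> Y) l :
  ForallOrdPairs R l -> (forall u v, R u v -> f u <> f v) -> NoDup (map f l).
Proof.
  intros Hl Hr; apply NoDup_iff_ForallOrdPairs.
  eapply ForallOrdPairs_map; eauto.
Qed.

Definition sum_map {T : Type} (f : T -> nat) (l : list T) : nat := list_sum (map f l).

Lemma sum_map_app {T} (f : T -> nat) l1 l2 : sum_map f (l1 ++ l2) = sum_map f l1 + sum_map f l2.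
Proof. unfold sum_map; rewrite map_app; apply list_sum_app. Qed.

Lemma sum_map_le {T} (f g : T -> nat) l :
  (forall w, In w l -> f w <= g w) -> sum_map f l <= sum_map g l.
Proof.
  induction l as [|a l IH]; simpl; intros Hfg; auto.
  pose proof (Hfg a (or_introl eq_refl)); specialize (IH (fun w h => Hfg w (or_intror h))).
  unfold sum_map in *; simpl; lia.
Qed.

Lemma sum_map_lt {T} (f g : T -> nat) l w0 :
  (forall w, In w l -> f w <= g w) -> In w0 l -> f w0 < g w0 -> sum_map f l < sum_map g l.
Proof.
  induction l as [|a l IH]; simpl; intros Hfg Hw0 Hlt; [destruct Hw0|].
  pose proof (sum_map_le f g l (fun w h => Hfg w (or_intror h))) as Hle.
  pose proof (Hfg a (or_introl eq_refl)).
  unfold sum_map in *; simpl.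
  destruct Hw0 as [<-|Hw0]; [lia|].
  specialize (IH (fun w h => Hfg w (or_intror h)) Hw0 Hlt); lia.
Qed.

Lemma sum_map_zero {T} (f : T -> nat) l : (forall w, In w l -> f w = 0) -> sum_map f l = 0.
Proof.
  induction l as [|a l IH]; simpl; intros Hf; auto.
  unfold sum_map in *; simpl; rewrite Hf, IH; auto.
Qed.

(** * Completion forests guided by a tableau *)

Section GuidedRun.

Local Set Implicit Arguments.
Local Unset Strict Implicit.

Variable TN : nat -> Prop.
Variable H : role_hierarchy.
Variable A : abox.
Hypothesis A_nnf : abox_nnf A.

Variable T : Type.
Variable L : T -> concept -> Prop.
Variable E : role -> T -> T -> Prop.
Variable I : nat -> T.
Hypothesis L_clos : forall s C, L s C -> clos A C.
Hypothesis E_in_RA : forall R s t, E R s t -> in_RA H A R.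
Hypothesis P1 : forall s C, L s C -> ~ L s (CNot C).
Hypothesis P2 : forall s C1 C2, L s (CAnd C1 C2) -> L s C1 /\ L s C2.
Hypothesis P3 : forall s C1 C2, L s (COr C1 C2) -> L s C1 \/ L s C2.
Hypothesis P4 : forall s t S0 C, L s (CAll S0 C) -> E S0 s t -> L t C.
Hypothesis P5 : forall s S0 C, L s (CEx S0 C) -> exists t, E S0 s t /\ L t C.
Hypothesis P6 : forall s t R S0 C, L s (CAll S0 C) -> in_RA H A R -> E R s t ->
  sub_role H R S0 -> Trans TN R -> L t (CAll R C).
Hypothesis P7 : forall s t R, in_RA H A R -> (E R s t <-> E (Inv R) t s).
Hypothesis P8 : forall s t R S0, in_RA H A S0 -> E R s t -> sub_role H R S0 -> E S0 s t.
Hypothesis P9 : forall s n S0 C, L s (CAtMost n S0 C) ->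
  at_most n (fun t => E S0 s t /\ L t C).
Hypothesis P10 : forall s n S0 C, L s (CAtLeast n S0 C) ->
  at_least n (fun t => E S0 s t /\ L t C).
Hypothesis P11 : forall s t n S0 C, (L s (CAtMost n S0 C) \/ L s (CAtLeast n S0 C)) ->
  E S0 s t -> L t C \/ L t (nnf_neg C).
Hypothesis P12 : forall a C, In (AConcept a C) A -> L (I a) C.
Hypothesis P13 : forall a b R, In (ARole a b R) A -> E R (I a) (I b).
Hypothesis P14 : forall a b, In (ANeq a b) A -> I a <> I b.

Definition clos_universe : list concept := abox_closure_list A.
Definition role_universe : list role := role_list H A.

Definition label_triples : list (list bool * list bool * list bool) :=
  list_prod (list_prod (all_bitvectors (length clos_universe))
                       (all_bitvectors (length clos_universe)))
            (all_bitvectors (length role_universe)).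

(* Unblocked nodes have depth at most [length label_triples] ([unblocked_depth_le]),
   so nodes created below them have depth at most [max_depth]. *)
Definition max_depth : nat := S (length label_triples).
Definition measure_len : nat := S (S max_depth).
Definition node_cap : nat := 2 * length clos_universe + 1.

Lemma L_in_clos_universe s C : L s C -> In C clos_universe.
Proof. intros h; apply clos_abox_closure_list; eauto. Qed.

Lemma L_role_in_RA s C R : L s C -> role_in_concept R C -> in_RA H A R.
Proof.
  intros Hl Hr; destruct (L_clos Hl) as [a [C0 [HA Hc]]].
  left; left; exists a, C0; split; auto; eapply role_in_concept_in_closure; eauto.
Qed.

(* The bookkeeping the forest does not store: the tableau image of each node, the tree
   parent and depth of non-root nodes, the finite node set, and the roots removed by
   the <=r-rule. *)
Record guide : Type := Guide {
  img : nat -> T;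
  parent : nat -> nat;
  depth : nat -> nat;
  nodes : list nat;
  removed : list nat
}.

Record guided (F : forest) (g : guide) : Prop := {
  gd_node : forall w, f_node F w <-> In w (nodes g);
  gd_root : f_root F = ind_in A;
  gd_root_node : forall w, ind_in A w -> In w (nodes g);
  gd_lab : forall w C, f_lab F w C -> In w (nodes g) /\ L (img g w) C;
  gd_elab : forall u v R, f_elab F u v R -> f_edge F u v /\ E R (img g u) (img g v);
  gd_edge : forall u v, f_edge F u v -> In u (nodes g) /\ In v (nodes g);
  gd_neq : forall u v, f_neq F u v ->
    f_neq F v u /\ img g u <> img g v /\ In u (nodes g) /\ In v (nodes g);
  gd_edge_to_root : forall u v, f_edge F u v -> ind_in A v ->
    ind_in A u /\ exists R, f_elab F u v R;
  gd_edge_to_nonroot : forall u v, f_edge F u v -> ~ ind_in A v -> u = parent g v;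
  gd_parent : forall v, In v (nodes g) -> ~ ind_in A v ->
    f_edge F (parent g v) v /\ depth g v = S (depth g (parent g v));
  gd_root_depth : forall v, ind_in A v -> depth g v = 0;
  gd_depth_le : forall v, In v (nodes g) -> depth g v <= max_depth;
  gd_removed : forall d, In d (removed g) ->
    ind_in A d /\ (forall C, ~ f_lab F d C) /\ (forall u, ~ f_edge F u d /\ ~ f_edge F d u)
}.

Definition merged (F : forest) (g : guide) (w : nat) : Prop :=
  ~ ind_in A w /\ forall R, ~ f_elab F (parent g w) w R.

Definition satisfied (F : forest) (w : nat) (D : concept) : Prop :=
  f_lab F w D /\
  match D with
  | CEx S0 C => exists z, S_nbr H F S0 w z /\ f_lab F z C
  | CAtLeast n S0 C => exists l, length l = n /\ ForallOrdPairs (f_neq F) l /\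
                         forall y, In y l -> S_nbr H F S0 w y /\ f_lab F y C
  | _ => False
  end.

Definition progress (F : forest) (g : guide) (w : nat) : nat :=
  if excluded_middle_informative (merged F g w) then node_cap
  else count_sat (f_lab F w) clos_universe + count_sat (satisfied F w) clos_universe.

Definition live_roots (g : guide) : nat :=
  count_sat (fun r => ~ In r (removed g)) (abox_individuals A).

Definition level_deficit (F : forest) (g : guide) (d : nat) : nat :=
  sum_map (fun w => if Nat.eq_dec (depth g w) d then node_cap - progress F g w else 0)
          (nodes g).

Definition measure (F : forest) (g : guide) (d : nat) : nat :=
  match d with 0 => live_roots g | S d => level_deficit F g d end.

Definition has_guided_step (F : forest) (g : guide) : Prop :=
  exists F' g', rule_step TN H F F' /\ guided F' g' /\
    vec_lt measure_len (measure F' g') (measure F g).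

Lemma lab_in_clos_universe F g w C : guided F g -> f_lab F w C -> In C clos_universe.
Proof. intros Hg Hl; apply (gd_lab Hg) in Hl; eapply L_in_clos_universe, Hl. Qed.

Lemma elab_in_role_universe F g u v R : guided F g -> f_elab F u v R -> In R role_universe.
Proof. intros Hg He; apply (gd_elab Hg) in He; eapply in_RA_role_list, E_in_RA, He. Qed.

Lemma progress_le_cap F g w : progress F g w <= node_cap.
Proof.
  unfold progress, node_cap; destruct (excluded_middle_informative _); auto.
  pose proof (count_sat_le_length (f_lab F w) clos_universe).
  pose proof (count_sat_le_length (satisfied F w) clos_universe); lia.
Qed.

Lemma ancestor_of_root F g a b : guided F g -> ancestor F a b -> ind_in A b -> ind_in A a.
Proof.
  intros Hg Hab; induction Hab as [u v He|u v w _ IH1 _ IH2]; auto.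
  intros Hv; apply (gd_edge_to_root Hg He Hv).
Qed.

Lemma ancestor_depth_lt F g a b : guided F g -> ancestor F a b -> ~ ind_in A b ->
  depth g a < depth g b.
Proof.
  intros Hg Hab; induction Hab as [u v He|u v w Huv IH1 Hvw IH2]; intros Hb.
  - rewrite (gd_edge_to_nonroot Hg He Hb).
    destruct (gd_parent Hg (proj2 (gd_edge Hg He)) Hb) as [_ ->]; auto.
  - specialize (IH2 Hb).
    destruct (classic (ind_in A v)) as [Hv|Hv]; [|specialize (IH1 Hv); lia].
    rewrite (gd_root_depth Hg (ancestor_of_root Hg Huv Hv)); lia.
Qed.

Lemma ancestor_irrefl F g x : guided F g -> ~ ind_in A x -> ~ ancestor F x x.
Proof. intros Hg Hx Ha; pose proof (ancestor_depth_lt Hg Ha Hx); lia. Qed.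

Lemma root_not_indirectly_blocked F g x : guided F g -> ind_in A x -> ~ indirectly_blocked F x.
Proof.
  intros Hg Hx [[a [Ha [Hb _]]]|[p [He Hn]]].
  - rewrite (gd_root Hg) in Hb; eapply Hb, ancestor_of_root; eauto.
  - destruct (gd_edge_to_root Hg He Hx) as [_ [R HR]]; eapply Hn; eauto.
Qed.

Lemma not_blocked_not_indirectly_blocked F g x : guided F g -> ~ blocked F x ->
  ~ indirectly_blocked F x.
Proof.
  intros Hg Hb Hib; destruct (classic (ind_in A x)) as [Hx|Hx].
  - eapply root_not_indirectly_blocked; eauto.
  - apply Hb; split; [rewrite (gd_root Hg); auto | right; auto].
Qed.

Lemma merged_blocked_sol F g y : guided F g -> In y (nodes g) -> merged F g y -> blocked_sol F y.
Proof.
  intros Hg Hy [Hr Hm]; rewrite <- (gd_root Hg) in Hr.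
  split; auto; exists y; repeat split; auto; right.
  exists (parent g y); split; auto; apply (gd_parent Hg); auto; rewrite <- (gd_root Hg); auto.
Qed.

Lemma not_indirectly_blocked_unmerged F g x : guided F g -> In x (nodes g) ->
  ~ indirectly_blocked F x -> ~ merged F g x.
Proof.
  intros Hg Hx Hib [Hr Hm]; apply Hib; right.
  exists (parent g x); split; auto; apply (gd_parent Hg); auto.
Qed.

Lemma nbr_nodes F g S0 x y : guided F g -> S_nbr H F S0 x y ->
  In x (nodes g) /\ In y (nodes g).
Proof.
  intros Hg [[R [He _]]|[R [He _]]];
    apply (gd_elab Hg), proj1, (gd_edge Hg) in He; tauto.
Qed.

Lemma nbr_unmerged F g S0 x y : guided F g -> ~ indirectly_blocked F x -> S_nbr H F S0 x y ->
  ~ merged F g y.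
Proof.
  intros Hg Hib Hn [Hr Hm]; destruct (nbr_nodes Hg Hn) as [Hx Hy].
  destruct Hn as [[R [He _]]|[R [He _]]]; pose proof (proj1 (gd_elab Hg He)) as Hed.
  - rewrite (gd_edge_to_nonroot Hg Hed Hr) in He; eapply Hm; eauto.
  - destruct (classic (ind_in A x)) as [Hxr|Hxr].
    + apply Hr, (gd_edge_to_root Hg Hed Hxr).
    + apply Hib; left; exists y; split; [apply t_step; auto|].
      apply merged_blocked_sol with g; [auto|auto|split; auto].
Qed.

Lemma nbr_E F g S0 x y : guided F g -> S_nbr H F S0 x y -> in_RA H A S0 ->
  E S0 (img g x) (img g y).
Proof.
  intros Hg [[R [He Hs]]|[R [He Hs]]] Hra; apply (gd_elab Hg) in He; destruct He as [_ He].
  - eapply P8; eauto.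
  - apply (P7 _ _ (E_in_RA He)) in He.
    apply sub_role_Inv in Hs; rewrite Inv_involutive in Hs; eapply P8; eauto.
Qed.

Definition label_triple (F : forest) (g : guide) (w : nat) : list bool * list bool * list bool :=
  (bitvector (f_lab F (parent g w)) clos_universe, bitvector (f_lab F w) clos_universe,
   bitvector (f_elab F (parent g w) w) role_universe).

Lemma label_triple_in F g w : In (label_triple F g w) label_triples.
Proof. repeat apply in_prod; apply bitvector_in_all_bitvectors. Qed.

Fixpoint ancestor_chain (g : guide) (k w : nat) : list nat :=
  match k with 0 => [] | S k => w :: ancestor_chain g k (parent g w) end.

Lemma ancestor_chain_spec F g k w : guided F g -> In w (nodes g) -> depth g w = k ->
  (forall a, In a (ancestor_chain g k w) ->
     In a (nodes g) /\ ~ ind_in A a /\ (a = w \/ ancestor F a w) /\ depth g a <= k) /\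
  (forall a b, In a (ancestor_chain g k w) -> In b (ancestor_chain g k w) ->
     a = b \/ ancestor F a b \/ ancestor F b a) /\
  NoDup (ancestor_chain g k w) /\ length (ancestor_chain g k w) = k.
Proof.
  intros Hg; revert w; induction k as [|k IH]; intros w Hw Hd.
  - simpl; repeat split; try tauto; constructor.
  - assert (Hnr : ~ ind_in A w) by (intros Hr; rewrite (gd_root_depth Hg Hr) in Hd; discriminate).
    destruct (gd_parent Hg Hw Hnr) as [He Hdp].
    pose proof (proj1 (gd_edge Hg He)) as Hpn.
    destruct (IH (parent g w) Hpn ltac:(lia)) as (h1 & h2 & h3 & h4).
    assert (Hanc : forall a, In a (ancestor_chain g k (parent g w)) -> ancestor F a w).
    { intros a Ha; destruct (h1 a Ha) as (_ & _ & [->|Hap] & _);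
        [apply t_step | eapply t_trans; [|apply t_step]]; eauto. }
    simpl; split; [|split; [|split]].
    + intros a [<-|Ha]; [repeat split; auto; lia|].
      destruct (h1 a Ha) as (a1 & a2 & a3 & a4); repeat split; auto; lia.
    + intros a b [<-|Ha] [<-|Hb]; auto.
    + constructor; auto; intros Hin; destruct (h1 w Hin) as (_ & _ & _ & b4); lia.
    + rewrite h4; auto.
Qed.

Lemma bitvector_lab_eq F g u v : guided F g ->
  bitvector (f_lab F u) clos_universe = bitvector (f_lab F v) clos_universe -> lab_eq F u v.
Proof.
  intros Hg Hb C; split; intros Hl;
    (apply (bitvector_inj _ _ _ Hb); [eapply lab_in_clos_universe|]); eauto.
Qed.

Lemma bitvector_elab_eq F g u v u' v' : guided F g ->
  bitvector (f_elab F u v) role_universe = bitvector (f_elab F u' v') role_universe ->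
  elab_eq F u v u' v'.
Proof.
  intros Hg Hb R; split; intros Hl;
    (apply (bitvector_inj _ _ _ Hb); [eapply elab_in_role_universe|]); eauto.
Qed.

Lemma equal_triples_block_cond F g a b : guided F g ->
  In a (nodes g) -> ~ ind_in A a -> In b (nodes g) -> ~ ind_in A b -> ancestor F a b ->
  label_triple F g a = label_triple F g b -> block_cond F b.
Proof.
  intros Hg Ha Hra Hb Hrb Hab Htr.
  destruct (gd_parent Hg Ha Hra) as [ea _]; destruct (gd_parent Hg Hb Hrb) as [eb _].
  injection Htr as t1 t2 t3.
  exists (parent g b), a, (parent g a); repeat split; auto;
    try (eapply bitvector_lab_eq; eauto); try (eapply bitvector_elab_eq; eauto).
  - apply t_step; auto.
  - eapply t_trans; [apply t_step|]; eauto.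
  - rewrite (gd_root Hg); auto.
Qed.

Lemma block_cond_blocked F g x b : guided F g -> ~ ind_in A x -> ~ ind_in A b ->
  (b = x \/ ancestor F b x) -> block_cond F b -> blocked F x.
Proof.
  intros Hg Hx Hb Hbx Hbc; rewrite <- (gd_root Hg) in Hx, Hb; split; auto.
  destruct (classic (exists c, ancestor F c x /\ blocked_sol F c)) as [Hc|Hc].
  - right; left; auto.
  - left; split; [intros c Hcx Hcs; apply Hc; eauto|].
    destruct Hbx as [<-|Hbx]; auto; exfalso; apply Hc.
    exists b; split; auto; split; auto; exists b; auto.
Qed.

(* Pigeonhole along the ancestor chain: two equal label triples yield a blocking pair. *)
Lemma unblocked_depth_le F g x : guided F g -> In x (nodes g) -> ~ blocked F x ->
  depth g x <= length label_triples.
Proof.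
  intros Hg Hx Hnb.
  destruct (classic (ind_in A x)) as [Hr|Hr]; [rewrite (gd_root_depth Hg Hr); lia|].
  destruct (ancestor_chain_spec Hg Hx eq_refl) as (c1 & c2 & c3 & c4).
  set (ch := ancestor_chain g (depth g x) x) in *.
  destruct (classic (NoDup (map (label_triple F g) ch))) as [Hnd|Hnd].
  - rewrite <- c4, <- (length_map (label_triple F g) ch).
    apply NoDup_incl_length; auto; intros t Ht.
    apply in_map_iff in Ht; destruct Ht as [w [<- _]]; apply label_triple_in.
  - exfalso; destruct (map_not_NoDup _ _ c3 Hnd) as (a & b & Ha & Hb & Hab & Htr).
    assert (Hblocks : forall a b, In a ch -> In b ch -> ancestor F a b ->
              label_triple F g a = label_triple F g b -> blocked F x).
    { clear a b Ha Hb Hab Htr; intros a b Ha Hb Hlt Htr.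
      destruct (c1 a Ha) as (a1 & a2 & _); destruct (c1 b Hb) as (b1 & b2 & b3 & _).
      apply (block_cond_blocked Hg Hr b2 b3).
      apply (equal_triples_block_cond Hg a1 a2 b1 b2); auto. }
    destruct (c2 a b Ha Hb) as [|[Hab'|Hba]]; [contradiction|..]; apply Hnb; eauto.
Qed.

Lemma guided_images_NoDup F g l : guided F g -> ForallOrdPairs (f_neq F) l ->
  NoDup (map (img g) l).
Proof.
  intros Hg Hl; eapply ForallOrdPairs_NoDup_map; eauto.
  intros u v Huv; apply (gd_neq Hg Huv).
Qed.

Lemma atmost_nbrs_length_le F g x n S0 C l : guided F g -> f_lab F x (CAtMost n S0 C) ->
  (forall y, In y l -> S_nbr H F S0 x y /\ f_lab F y C) -> NoDup (map (img g) l) ->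
  length l <= n.
Proof.
  intros Hg Hl Hall Hnd; destruct (gd_lab Hg Hl) as [_ HL].
  assert (Hra : in_RA H A S0) by (eapply L_role_in_RA; [exact HL | simpl; auto]).
  destruct (P9 HL) as [lt [Hle Hin]].
  enough (length (map (img g) l) <= length lt) by (rewrite length_map in *; lia).
  apply NoDup_incl_length; auto; intros t Ht.
  apply in_map_iff in Ht; destruct Ht as [y [<- Hy]]; destruct (Hall y Hy) as [hn hc].
  apply Hin; split; [eapply nbr_E; eauto | apply (gd_lab Hg hc)].
Qed.

Lemma guided_clash_free F g : guided F g -> clash_free H F.
Proof.
  intros Hg x [[A0 [h1 h2]]|(n & S0 & C & hl & l & hlen & hfop & hall)].
  - eapply P1; [apply (gd_lab Hg h1) | apply (gd_lab Hg h2)].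
  - enough (length l <= n) by lia.
    eapply atmost_nbrs_length_le; eauto; eapply guided_images_NoDup; eauto.
Qed.

Definition init_guide : guide := Guide I (fun _ => 0) (fun _ => 0) (abox_individuals A) [].

Lemma init_guided : guided (init_forest A) init_guide.
Proof.
  assert (Hind : forall x a, In x A -> match x with
                                       | AConcept b _ => a = b
                                       | ARole b c _ | ANeq b c => a = b \/ a = c
                                       end -> In a (abox_individuals A))
    by (intros x a Hx Ha; apply ind_in_abox_individuals; exists x; auto).
  constructor; simpl.
  - intros; apply ind_in_abox_individuals.
  - reflexivity.
  - intros; apply ind_in_abox_individuals; auto.
  - intros w C h; split; [eapply (Hind (AConcept w C)) | apply P12]; eauto.
  - intros u v R h; split; [eauto | apply P13; auto].
  - intros u v [R h]; split; eapply (Hind (ARole u v R)); eauto.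
  - intros u v Huv; repeat split; [tauto | | |].
    + destruct Huv as [h|h]; [apply P14 | apply not_eq_sym, P14]; auto.
    + destruct Huv as [h|h]; [eapply (Hind (ANeq u v)) | eapply (Hind (ANeq v u))];
        simpl; eauto.
    + destruct Huv as [h|h]; [eapply (Hind (ANeq u v)) | eapply (Hind (ANeq v u))];
        simpl; eauto.
  - intros u v [R h] _; split; [|eauto].
    apply ind_in_abox_individuals; eapply (Hind (ARole u v R)); eauto.
  - intros u v [R h] hn; exfalso.
    apply hn, ind_in_abox_individuals; eapply (Hind (ARole u v R)); eauto.
  - intros v hv hn; exfalso; apply hn, ind_in_abox_individuals; auto.
  - auto.
  - intros; lia.
  - intros d [].
Qed.

(** * The termination measure *)

Lemma S_nbr_mono F F' : (forall u v R, f_elab F u v R -> f_elab F' u v R) ->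
  forall S0 x y, S_nbr H F S0 x y -> S_nbr H F' S0 x y.
Proof. intros He S0 x y [[R [h1 h2]]|[R [h1 h2]]]; [left|right]; exists R; auto. Qed.

Lemma satisfied_mono F F' : (forall u v R, f_elab F u v R -> f_elab F' u v R) ->
  (forall u C, f_lab F u C -> f_lab F' u C) -> (forall u v, f_neq F u v -> f_neq F' u v) ->
  forall w D, satisfied F w D -> satisfied F' w D.
Proof.
  intros He Hl Hn w D [h1 h2]; split; auto; destruct D; auto.
  - destruct h2 as [z [hz hc]]; exists z; split; auto; eapply S_nbr_mono; eauto.
  - destruct h2 as [l [hlen [hf hall]]]; exists l; repeat split; auto.
    + eapply ForallOrdPairs_impl; [|exact hf]; auto.
    + eapply S_nbr_mono, hall; eauto.
    + apply Hl, hall; auto.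
Qed.

Definition extends_at (F : forest) (g : guide) (F' : forest) (g' : guide) (w : nat) : Prop :=
  (merged F g w -> merged F' g' w) /\ (forall C, f_lab F w C -> f_lab F' w C) /\
  (~ merged F' g' w -> forall D, satisfied F w D -> satisfied F' w D).

Lemma progress_mono F g F' g' w : extends_at F g F' g' w -> progress F g w <= progress F' g' w.
Proof.
  intros (Hm & Hl & Hs); unfold progress.
  destruct (excluded_middle_informative (merged F' g' w)) as [h'|h'].
  - apply (progress_le_cap F g w).
  - destruct (excluded_middle_informative (merged F g w)) as [h|h]; [tauto|].
    pose proof (count_sat_mono (f_lab F w) (f_lab F' w) clos_universe (fun x _ => Hl x)).
    pose proof (count_sat_mono _ _ clos_universe (fun x _ => Hs h' x)); lia.
Qed.

Lemma progress_lt F g F' g' w : extends_at F g F' g' w -> ~ merged F' g' w ->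
  (exists D, In D clos_universe /\
     ((f_lab F' w D /\ ~ f_lab F w D) \/ (satisfied F' w D /\ ~ satisfied F w D))) ->
  progress F g w < progress F' g' w.
Proof.
  intros (Hm & Hl & Hs) h' [D [HD Hnew]]; unfold progress.
  destruct (excluded_middle_informative (merged F' g' w)) as [h''|_]; [tauto|].
  destruct (excluded_middle_informative (merged F g w)) as [h|h]; [tauto|].
  pose proof (count_sat_mono (f_lab F w) (f_lab F' w) clos_universe (fun x _ => Hl x)).
  pose proof (count_sat_mono _ _ clos_universe (fun x _ => Hs h' x)).
  destruct Hnew as [Hnew|Hnew].
  - pose proof (count_sat_lt (f_lab F w) (f_lab F' w) clos_universe (fun x _ => Hl x)
                  (ex_intro _ D (conj HD Hnew))); lia.
  - pose proof (count_sat_lt _ _ clos_universe (fun x _ => Hs h' x)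
                  (ex_intro _ D (conj HD Hnew))); lia.
Qed.

Lemma progress_lt_merge F g F' g' w : ~ merged F g w -> merged F' g' w ->
  progress F g w < progress F' g' w.
Proof.
  intros h h'; unfold progress.
  destruct (excluded_middle_informative (merged F' g' w)) as [_|h'']; [|tauto].
  destruct (excluded_middle_informative (merged F g w)) as [h''|_]; [tauto|].
  pose proof (count_sat_le_length (f_lab F w) clos_universe).
  pose proof (count_sat_le_length (satisfied F w) clos_universe); unfold node_cap; lia.
Qed.

(* Only levels up to [k] are compared, and the new nodes, at level [k + 1], do not occur
   there. *)
Lemma measure_decreases F g F' g' new k w0 :
  nodes g' = nodes g ++ new -> removed g' = removed g ->
  (forall w, In w (nodes g) -> depth g' w = depth g w) ->
  (forall w, In w new -> depth g' w = S k) ->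
  (forall w, In w (nodes g) -> progress F g w <= progress F' g' w) ->
  In w0 (nodes g) -> progress F g w0 < progress F' g' w0 -> depth g w0 = k -> k <= max_depth ->
  vec_lt measure_len (measure F' g') (measure F g).
Proof.
  intros Hns Hrm Hdep Hdnew Hp Hw0 Hlt Hk HD.
  assert (Hsplit : forall e, e <= k -> level_deficit F' g' e =
            sum_map (fun w => if Nat.eq_dec (depth g w) e then node_cap - progress F' g' w else 0)
                    (nodes g)).
  { intros e He; unfold level_deficit; rewrite Hns, sum_map_app.
    rewrite (sum_map_zero _ new), Nat.add_0_r.
    - unfold sum_map; f_equal; apply map_ext_in; intros w Hw; rewrite Hdep; auto.
    - intros w Hw; rewrite Hdnew by auto; destruct (Nat.eq_dec (S k) e); [lia | auto]. }
  assert (Hle : forall e w, In w (nodes g) ->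
            (if Nat.eq_dec (depth g w) e then node_cap - progress F' g' w else 0) <=
            (if Nat.eq_dec (depth g w) e then node_cap - progress F g w else 0))
    by (intros e w Hw; destruct (Nat.eq_dec _ _); [specialize (Hp w Hw)|]; lia).
  exists (S k); split; [unfold measure_len; lia|]; split.
  - simpl; rewrite Hsplit by lia; apply (sum_map_lt _ _ _ w0); auto.
    rewrite Hk; destruct (Nat.eq_dec k k); [|lia].
    pose proof (progress_le_cap F' g' w0); lia.
  - intros [|e] He; simpl.
    + unfold live_roots; rewrite Hrm; auto.
    + rewrite Hsplit by lia; apply sum_map_le; auto.
Qed.

Lemma lab_not_removed F g w C : guided F g -> f_lab F w C -> ~ In w (removed g).
Proof. intros Hg Hl Hd; eapply (proj1 (proj2 (gd_removed Hg Hd))); eauto. Qed.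

Lemma nbr_not_removed F g S0 x y : guided F g -> S_nbr H F S0 x y -> ~ In y (removed g).
Proof.
  intros Hg [[R [He _]]|[R [He _]]] Hd; apply (gd_elab Hg), proj1 in He;
    destruct (gd_removed Hg Hd) as (_ & _ & Hno);
    [apply (proj1 (Hno x)) | apply (proj2 (Hno x))]; auto.
Qed.

(** * The labelling rules *)

Lemma add_labels_guided F g y P : guided F g -> In y (nodes g) -> ~ In y (removed g) ->
  (forall D, P D -> L (img g y) D) -> guided (add_labels F y P) g.
Proof.
  intros Hg Hy Hyr HP; destruct Hg; constructor; simpl; auto.
  - intros w C [h|[-> h]]; auto.
  - intros d Hd; destruct (gd_removed0 d Hd) as (h1 & h2 & h3).
    split; [auto | split; [|apply h3]].
    intros C [h|[-> h]]; [eapply h2 | apply Hyr]; eauto.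
Qed.

Lemma add_labels_decreases F g y P : guided F g -> In y (nodes g) -> ~ merged F g y ->
  (exists D, P D /\ ~ f_lab F y D) -> (forall D, P D -> L (img g y) D) ->
  vec_lt measure_len (measure (add_labels F y P) g) (measure F g).
Proof.
  intros Hg Hy Hm [D [HD HnD]] HP.
  assert (Hext : forall w, extends_at F g (add_labels F y P) g w).
  { intros w; split; [|split]; [intros h; exact h | simpl; auto |].
    intros _; apply satisfied_mono; simpl; auto. }
  apply (measure_decreases (new := [])) with (k := depth g y) (w0 := y); auto.
  - rewrite app_nil_r; auto.
  - intros w [].
  - intros w _; apply progress_mono, Hext.
  - apply progress_lt; auto; exists D; split; [eapply L_in_clos_universe; eauto|].
    left; simpl; auto.
  - apply (gd_depth_le Hg Hy).
Qed.

Lemma add_labels_step F g y P : guided F g -> In y (nodes g) -> ~ In y (removed g) ->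
  ~ merged F g y -> (forall D, P D -> L (img g y) D) -> (exists D, P D /\ ~ f_lab F y D) ->
  rule_step TN H F (add_labels F y P) -> has_guided_step F g.
Proof.
  intros Hg Hy Hyr Hm HP Hnew Hstep; exists (add_labels F y P), g; split; auto.
  split; [apply add_labels_guided | apply add_labels_decreases]; auto.
Qed.

Lemma add_label_at_step F g x C0 D : guided F g -> f_lab F x C0 -> ~ indirectly_blocked F x ->
  L (img g x) D -> ~ f_lab F x D -> rule_step TN H F (add_label F x D) -> has_guided_step F g.
Proof.
  intros Hg Hl Hib HD HnD; destruct (gd_lab Hg Hl) as [Hx _].
  apply add_labels_step; eauto using lab_not_removed, not_indirectly_blocked_unmerged.
  intros ? ->; auto.
Qed.

Lemma add_label_nbr_step F g x S0 y D : guided F g -> ~ indirectly_blocked F x ->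
  S_nbr H F S0 x y -> L (img g y) D -> ~ f_lab F y D ->
  rule_step TN H F (add_label F y D) -> has_guided_step F g.
Proof.
  intros Hg Hib Hn HD HnD; destruct (nbr_nodes Hg Hn) as [_ Hy].
  apply add_labels_step; eauto using nbr_not_removed, nbr_unmerged.
  intros ? ->; auto.
Qed.

Lemma and_rule_step F g x C1 C2 : guided F g -> f_lab F x (CAnd C1 C2) ->
  ~ indirectly_blocked F x -> ~ (f_lab F x C1 /\ f_lab F x C2) -> has_guided_step F g.
Proof.
  intros Hg Hl Hib Hn; destruct (gd_lab Hg Hl) as [Hx HL].
  apply (add_labels_step (y := x) (P := fun D => D = C1 \/ D = C2)); auto.
  - eapply lab_not_removed; eauto.
  - apply not_indirectly_blocked_unmerged; auto.
  - intros D [-> | ->]; apply (P2 HL).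
  - destruct (classic (f_lab F x C1)); [exists C2 | exists C1]; auto.
  - apply r_and; auto.
Qed.

Lemma or_rule_step F g x C1 C2 : guided F g -> f_lab F x (COr C1 C2) ->
  ~ indirectly_blocked F x -> ~ f_lab F x C1 -> ~ f_lab F x C2 -> has_guided_step F g.
Proof.
  intros Hg Hl Hib Hn1 Hn2; destruct (gd_lab Hg Hl) as [_ HL].
  destruct (P3 HL) as [HD|HD]; eapply (add_label_at_step Hg Hl Hib HD); auto;
    eapply r_or; eauto.
Qed.

Lemma all_rule_step F g x S0 C y : guided F g -> f_lab F x (CAll S0 C) ->
  ~ indirectly_blocked F x -> S_nbr H F S0 x y -> ~ f_lab F y C -> has_guided_step F g.
Proof.
  intros Hg Hl Hib Hn HnC; destruct (gd_lab Hg Hl) as [_ HL].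
  assert (Hra : in_RA H A S0) by (eapply L_role_in_RA; [exact HL | simpl; auto]).
  apply (add_label_nbr_step (D := C) Hg Hib Hn); auto.
  - eapply P4; eauto; eapply nbr_E; eauto.
  - eapply r_all; eauto.
Qed.

Lemma allplus_rule_step F g x S0 C R y : guided F g -> f_lab F x (CAll S0 C) ->
  ~ indirectly_blocked F x -> Trans TN R -> sub_role H R S0 -> S_nbr H F R x y ->
  ~ f_lab F y (CAll R C) -> has_guided_step F g.
Proof.
  intros Hg Hl Hib Htr Hsub Hn HnC; destruct (gd_lab Hg Hl) as [_ HL].
  assert (Hra : in_RA H A S0) by (eapply L_role_in_RA; [exact HL | simpl; auto]).
  assert (HraR : in_RA H A R) by (eapply in_RA_sub_role; eauto).
  apply (add_label_nbr_step (D := CAll R C) Hg Hib Hn); auto.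
  - eapply P6; eauto; eapply nbr_E; eauto.
  - eapply r_allplus; eauto.
Qed.

Lemma choose_rule_step F g x n S0 C y : guided F g ->
  (f_lab F x (CAtMost n S0 C) \/ f_lab F x (CAtLeast n S0 C)) -> ~ indirectly_blocked F x ->
  S_nbr H F S0 x y -> ~ f_lab F y C -> ~ f_lab F y (nnf_neg C) -> has_guided_step F g.
Proof.
  intros Hg Hl Hib Hn Hn1 Hn2.
  assert (HL : L (img g x) (CAtMost n S0 C) \/ L (img g x) (CAtLeast n S0 C))
    by (destruct Hl as [h|h]; apply (gd_lab Hg) in h; tauto).
  assert (Hra : in_RA H A S0)
    by (destruct HL as [h|h]; (eapply L_role_in_RA; [exact h | simpl; auto])).
  destruct (P11 HL (nbr_E Hg Hn Hra)) as [HD|HD];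
    eapply (add_label_nbr_step Hg Hib Hn HD); auto; eapply r_choose; eauto.
Qed.

(** * The generating rules *)

Definition in_range (base n w : nat) : bool := (base <=? w) && (w <? base + n).

Lemma in_range_seq base n w : in_range base n w = true <-> In w (seq base n).
Proof. unfold in_range; rewrite in_seq, Bool.andb_true_iff, Nat.leb_le, Nat.ltb_lt; tauto. Qed.

Lemma in_range_below base n w : w < base -> in_range base n w = false.
Proof. intros; unfold in_range; apply Bool.andb_false_iff; left; apply Nat.leb_gt; auto. Qed.

Definition extend_guide (g : guide) (x base n : nat) (ts : list T) : guide :=
  Guide (fun w => if in_range base n w then nth (w - base) ts (img g x) else img g w)
        (fun w => if in_range base n w then x else parent g w)
        (fun w => if in_range base n w then S (depth g x) else depth g w)
        (nodes g ++ seq base n) (removed g).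

Section NewSuccessors.
Variables (F : forest) (g : guide) (x : nat) (S0 : role) (C : concept) (base n : nat).
Variables (ts : list T) (pw : bool).
Hypothesis Hg : guided F g.
Hypothesis Hx : In x (nodes g).
Hypothesis Hbase : forall w, In w (nodes g) -> w < base.

Local Notation F' := (new_succs F x (seq base n) S0 C pw).
Local Notation g' := (extend_guide g x base n ts).

Lemma in_range_old w : In w (nodes g) -> in_range base n w = false.
Proof. intros; apply in_range_below; auto. Qed.

Lemma in_range_new w : In w (seq base n) -> in_range base n w = true.
Proof. intros; apply in_range_seq; auto. Qed.

Lemma seq_fresh w : In w (seq base n) -> ~ In w (nodes g).
Proof. intros Hw Hw'; apply Hbase in Hw'; apply in_seq in Hw; lia. Qed.

Lemma seq_fresh_node w : In w (seq base n) -> fresh F w.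
Proof. intros Hw; unfold fresh; rewrite (gd_node Hg); apply seq_fresh; auto. Qed.

Lemma new_succs_removed d : ~ In x (removed g) -> In d (removed g) ->
  ind_in A d /\ (forall D, ~ f_lab F' d D) /\ (forall u, ~ f_edge F' u d /\ ~ f_edge F' d u).
Proof.
  intros Hxr Hd; destruct (gd_removed Hg Hd) as (h1 & h2 & h3).
  assert (Hdn : ~ In d (seq base n)) by (intros h; apply (seq_fresh h), (gd_root_node Hg); auto).
  split; [auto | split]; simpl.
  - intros D [h|[hd _]]; [eapply h2 | apply Hdn]; eauto.
  - intros u; split; intros [h|[hu hv]]; subst;
      [apply (proj1 (h3 u)) | apply Hdn | apply (proj2 (h3 u)) | apply Hxr]; auto.
Qed.

Lemma new_succs_guided : ~ In x (removed g) -> depth g x <= length label_triples ->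
  length ts = n -> (forall t, In t ts -> E S0 (img g x) t /\ L t C) ->
  (pw = true -> NoDup ts) -> guided F' g'.
Proof.
  intros Hxr Hdx Hlen Hts Hnd.
  pose proof in_range_old as Hold; pose proof in_range_new as Hnew.
  assert (Himg : forall w, In w (seq base n) -> In (nth (w - base) ts (img g x)) ts)
    by (intros w Hw; apply nth_In; apply in_seq in Hw; lia).
  pose proof Hg as Hg'; destruct Hg'; constructor; simpl.
  - intros w; rewrite gd_node0, in_app_iff; tauto.
  - auto.
  - intros w Hw; apply in_or_app; auto.
  - intros w D [h|[hw ->]]; rewrite in_app_iff.
    + destruct (gd_lab0 _ _ h); rewrite Hold; auto.
    + rewrite Hnew; [split; [auto | apply Hts, Himg]|]; auto.
  - intros u v R [h|[-> [hv ->]]].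
    + destruct (gd_elab0 _ _ _ h) as [e1 e2]; destruct (gd_edge0 _ _ e1).
      rewrite (Hold u), (Hold v); auto.
    + rewrite Hold, Hnew; [split; [auto | apply Hts, Himg]| |]; auto.
  - intros u v [h|[-> hv]]; rewrite !in_app_iff; [destruct (gd_edge0 _ _ h)|]; auto.
  - intros u v [h|h]; rewrite !in_app_iff.
    + destruct (gd_neq0 _ _ h) as (a & b & c & d); rewrite (Hold u), (Hold v); auto.
    + destruct pw; [|contradiction]; destruct h as (hu & hv & hne).
      rewrite !Hnew by auto; split; [auto | split; [|auto]].
      apply in_seq in hu; apply in_seq in hv.
      intros Heq; apply (NoDup_nth ts (img g x)) in Heq; auto; lia.
  - intros u v [h|[-> hv]] Hr.
    + destruct (gd_edge_to_root0 _ _ h Hr) as [a [R b]]; split; eauto.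
    + exfalso; apply (seq_fresh hv), gd_root_node0; auto.
  - intros u v [h|[-> hv]] Hr.
    + rewrite Hold; [auto | apply (gd_edge0 _ _ h)].
    + rewrite Hnew; auto.
  - intros v Hv Hr; apply in_app_or in Hv; destruct Hv as [Hv|Hv].
    + destruct (gd_parent0 v Hv Hr) as [e d].
      rewrite (Hold v Hv), (Hold (parent g v)) by apply (gd_edge0 _ _ e); auto.
    + rewrite (Hnew v Hv), (Hold x Hx); auto.
  - intros v Hr; rewrite Hold; auto.
  - intros v Hv; apply in_app_or in Hv; destruct Hv as [Hv|Hv].
    + rewrite Hold; auto.
    + rewrite Hnew; unfold max_depth; auto; lia.
  - intros d Hd; apply new_succs_removed; auto.
Qed.

Lemma new_succs_decreases D : ~ merged F g x -> satisfied F' x D -> ~ satisfied F x D ->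
  In D clos_universe -> vec_lt measure_len (measure F' g') (measure F g).
Proof.
  intros Hm HD HnD HDU.
  assert (Hext : forall w, In w (nodes g) -> extends_at F g F' g' w).
  { intros w Hw; split; [|split]; [| simpl; auto |].
    - intros [hr hm]; split; auto; simpl; rewrite in_range_old by auto.
      intros R [h|[_ [h _]]]; [eapply hm; eauto | apply (seq_fresh h Hw)].
    - intros _; apply satisfied_mono; simpl; auto. }
  apply (measure_decreases (new := seq base n)) with (k := depth g x) (w0 := x); auto.
  - intros w Hw; simpl; rewrite in_range_old; auto.
  - intros w Hw; simpl; rewrite in_range_new; auto.
  - intros w Hw; apply progress_mono; auto.
  - apply progress_lt; eauto.
    intros [hr hm]; apply Hm; split; auto; intros R h; apply (hm R).
    simpl; rewrite in_range_old; auto.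
  - apply (gd_depth_le Hg Hx).
Qed.

End NewSuccessors.

Lemma new_succs_step F g x S0 C n ts pw D : guided F g -> f_lab F x D -> ~ blocked F x ->
  length ts = n -> (forall t, In t ts -> E S0 (img g x) t /\ L t C) -> (pw = true -> NoDup ts) ->
  (forall base, (forall w, In w (nodes g) -> w < base) ->
     rule_step TN H F (new_succs F x (seq base n) S0 C pw) /\
     satisfied (new_succs F x (seq base n) S0 C pw) x D) ->
  ~ satisfied F x D -> has_guided_step F g.
Proof.
  intros Hg Hl Hnb Hlen Hts Hnd Hstep HnD; destruct (gd_lab Hg Hl) as [Hx HL].
  set (base := S (list_max (nodes g))).
  assert (Hbase : forall w, In w (nodes g) -> w < base).
  { intros w Hw; enough (w <= list_max (nodes g)) by lia.
    apply (proj1 (Forall_forall _ _) (proj1 (list_max_le _ _) (le_n _))); auto. }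
  destruct (Hstep base Hbase) as [Hrule HD].
  exists (new_succs F x (seq base n) S0 C pw), (extend_guide g x base n ts).
  split; [|split]; auto.
  - apply new_succs_guided; eauto using lab_not_removed, unblocked_depth_le.
  - apply new_succs_decreases with (D := D); eauto using L_in_clos_universe.
    eapply not_indirectly_blocked_unmerged, not_blocked_not_indirectly_blocked; eauto.
Qed.

Lemma ex_rule_step F g x S0 C : guided F g -> f_lab F x (CEx S0 C) -> ~ blocked F x ->
  ~ (exists z, S_nbr H F S0 x z /\ f_lab F z C) -> has_guided_step F g.
Proof.
  intros Hg Hl Hnb Hnex; destruct (P5 (proj2 (gd_lab Hg Hl))) as [t Ht].
  apply (new_succs_step (S0 := S0) (C := C) (n := 1) (ts := [t]) (pw := false) Hg Hl Hnb);
    auto.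
  - intros t' [<-|[]]; auto.
  - intros; discriminate.
  - intros base Hbase; split.
    + apply r_ex; auto; apply (seq_fresh_node Hg Hbase (n := 1)); simpl; auto.
    + split; [simpl; auto|]; exists base; split; [|simpl; auto].
      left; exists S0; split; [simpl; auto | apply rt_refl].
  - intros [_ h]; auto.
Qed.

Lemma ge_rule_step F g x n S0 C : guided F g -> f_lab F x (CAtLeast n S0 C) -> ~ blocked F x ->
  ~ (exists l, length l = n /\ ForallOrdPairs (f_neq F) l /\
       forall y, In y l -> S_nbr H F S0 x y /\ f_lab F y C) -> has_guided_step F g.
Proof.
  intros Hg Hl Hnb Hnot; destruct (P10 (proj2 (gd_lab Hg Hl))) as (ts & Hlen & Hnd & Hts).
  apply (new_succs_step (S0 := S0) (C := C) (n := n) (ts := ts) (pw := true) Hg Hl Hnb);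
    auto.
  - intros base Hbase; split.
    + apply r_ge with (n := n); auto using length_seq, seq_NoDup.
      intros y; apply (seq_fresh_node Hg Hbase).
    + split; [simpl; auto|]; exists (seq base n); split; [apply length_seq|]; split.
      * apply (ForallOrdPairs_impl (fun a b => a <> b)), NoDup_iff_ForallOrdPairs;
          [simpl; auto | apply seq_NoDup].
      * intros w Hw; split; [|simpl; auto].
        left; exists S0; split; [simpl; auto | apply rt_refl].
  - intros [_ h]; auto.
Qed.

(** * The merging rules *)

Definition le_forest (F : forest) (x y z : nat) : forest :=
  MkForest (f_node F) (f_root F)
    (fun u D => f_lab F u D \/ (u = z /\ f_lab F y D))
    (fun u v => f_edge F u v \/ (ancestor F z x /\ u = z /\ v = x))
    (fun u v R =>
       (f_elab F u v R /\ ~ (u = x /\ v = y)) \/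
       (ancestor F z x /\ u = z /\ v = x /\ exists R', f_elab F x y R' /\ R = Inv R') \/
       (~ ancestor F z x /\ u = x /\ v = z /\ f_elab F x y R))
    (fun u v => f_neq F u v \/ (v = z /\ f_neq F u y) \/ (u = z /\ f_neq F v y))
    (f_eq F).

Lemma no_two_cycle F g x y : guided F g -> f_edge F x y -> f_edge F y x -> ~ ind_in A y -> False.
Proof.
  intros Hg Exy Eyx Hy; destruct (classic (ind_in A x)) as [Hx|Hx].
  - apply Hy, (gd_edge_to_root Hg Eyx Hx).
  - apply (ancestor_irrefl Hg Hy); eapply t_trans; apply t_step; eauto.
Qed.

Section LeMerge.
Variables (F : forest) (g : guide) (x : nat) (S0 : role) (y z : nat).
Hypothesis Hg : guided F g.
Hypothesis Hib : ~ indirectly_blocked F x.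
Hypothesis Hny : S_nbr H F S0 x y.
Hypothesis Hnz : S_nbr H F S0 x z.
Hypothesis Hyz : y <> z.
Hypothesis Hyr : ~ ind_in A y.
Hypothesis Hanc : ~ ancestor F y z.

Local Notation F' := (le_forest F x y z).

(* [y] can only be a neighbour of [x] as its child: otherwise [y] would be the parent of
   [x], hence an ancestor of [z] or equal to it. *)
Lemma le_merged_child : parent g y = x /\ exists R, f_elab F x y R.
Proof.
  destruct Hny as [[R [He _]]|[R [He _]]]; pose proof (proj1 (gd_elab Hg He)) as Ed.
  - split; [symmetry; apply (gd_edge_to_nonroot Hg Ed Hyr) | eauto].
  - exfalso; destruct (classic (ind_in A x)) as [Hxr|Hxr].
    + apply Hyr, (gd_edge_to_root Hg Ed Hxr).
    + pose proof (gd_edge_to_nonroot Hg Ed Hxr) as e.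
      destruct Hnz as [[R2 [He2 _]]|[R2 [He2 _]]]; pose proof (proj1 (gd_elab Hg He2)) as Ed2.
      * apply Hanc; eapply t_trans; apply t_step; eauto.
      * apply Hyz; rewrite e; symmetry; apply (gd_edge_to_nonroot Hg Ed2 Hxr).
Qed.

Lemma le_x_ne_y : x <> y.
Proof.
  destruct le_merged_child as [Hp _].
  destruct (gd_parent Hg (proj2 (nbr_nodes Hg Hny)) Hyr) as [_ d].
  rewrite Hp in d; intros Hxy; rewrite Hxy in d; lia.
Qed.

Lemma le_z_parent : ancestor F z x -> ~ ind_in A x -> parent g x = z.
Proof.
  intros Ha Hxr; destruct Hnz as [[R2 [He2 _]]|[R2 [He2 _]]];
    pose proof (proj1 (gd_elab Hg He2)) as Ed2.
  - exfalso; apply (ancestor_irrefl Hg Hxr); eapply t_trans; [apply t_step|]; eauto.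
  - symmetry; apply (gd_edge_to_nonroot Hg Ed2 Hxr).
Qed.

Lemma le_z_child : ~ ancestor F z x -> f_edge F x z.
Proof.
  intros Ha; destruct Hnz as [[R2 [He2 _]]|[R2 [He2 _]]]; apply (gd_elab Hg) in He2.
  - apply He2.
  - exfalso; apply Ha, t_step, He2.
Qed.

Hypothesis Himg : img g y = img g z.

Lemma le_forest_guided : ~ In x (removed g) -> guided F' g.
Proof.
  intros Hxr; destruct (nbr_nodes Hg Hnz) as [_ Hz].
  assert (Hzr : ~ In z (removed g)) by (eapply nbr_not_removed; eauto).
  destruct le_merged_child as [Hpy [R' HR']].
  pose proof Hg as Hg'; destruct Hg'; constructor; simpl; auto.
  - intros w D [h|[-> h]]; auto; destruct (gd_lab0 _ _ h); rewrite <- Himg; auto.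
  - intros u v R [[h _]|[(ha & -> & -> & R1 & h & ->)|(ha & -> & -> & h)]].
    + destruct (gd_elab0 _ _ _ h); auto.
    + destruct (gd_elab0 _ _ _ h) as [_ e]; split; [auto|].
      apply (P7 _ _ (E_in_RA e)) in e; rewrite <- Himg; auto.
    + destruct (gd_elab0 _ _ _ h) as [_ e]; split; [left; apply le_z_child; auto|].
      rewrite <- Himg; auto.
  - intros u v [h|(_ & -> & ->)]; auto; split; auto; apply (nbr_nodes Hg Hnz).
  - intros u v [h|[[-> h]|[-> h]]]; destruct (gd_neq0 _ _ h) as (a & b & c & d);
      rewrite <- ?Himg; repeat split; auto.
  - intros u v [h|(ha & -> & ->)] Hr.
    + destruct (gd_edge_to_root0 _ _ h Hr) as [a [R b]]; split; [auto|].
      exists R; left; split; auto; intros [_ ->]; auto.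
    + split; [eapply ancestor_of_root; eauto|].
      exists (Inv R'); right; left; repeat split; eauto.
  - intros u v [h|(ha & -> & ->)] Hr; auto; symmetry; apply le_z_parent; auto.
  - intros v Hv Hr; destruct (gd_parent0 v Hv Hr); auto.
  - intros d Hd; destruct (gd_removed0 d Hd) as (h1 & h2 & h3); split; [auto | split].
    + intros D [h|[-> _]]; [eapply h2; eauto | auto].
    + intros u; split; [intros [h|(_ & _ & ->)] | intros [h|(_ & -> & _)]];
        [apply (proj1 (h3 u)) | | apply (proj2 (h3 u)) |]; auto.
Qed.

Lemma le_forest_nbr_redirect S1 : S_nbr H F S1 x y -> S_nbr H F' S1 x z.
Proof.
  intros [[R [He Hs]]|[R [He Hs]]].
  - destruct (classic (ancestor F z x)) as [Ha|Ha].
    + right; exists (Inv R); split; [right; left; repeat split; eauto | apply sub_role_Inv; auto].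
    + left; exists R; split; auto; right; right; auto.
  - exfalso; destruct le_merged_child as [_ [R' HR']].
    apply (no_two_cycle Hg (proj1 (gd_elab Hg HR')) (proj1 (gd_elab Hg He)) Hyr).
Qed.

Lemma le_forest_nbr_keep S1 w v : S_nbr H F S1 w v -> w <> y -> ~ (w = x /\ v = y) ->
  S_nbr H F' S1 w v.
Proof.
  intros [[R [He Hs]]|[R [He Hs]]] Hwy Hxy.
  - left; exists R; split; auto; left; auto.
  - right; exists R; split; auto; left; split; auto; intros [_ ->]; auto.
Qed.

Lemma le_forest_satisfied w D : w <> y -> satisfied F w D -> satisfied F' w D.
Proof.
  intros Hwy [HD Hs]; split; [simpl; auto|]; destruct D; auto.
  - destruct Hs as [v [hv hc]].
    destruct (classic (w = x /\ v = y)) as [[-> ->]|Hc].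
    + exists z; split; [apply le_forest_nbr_redirect | simpl]; auto.
    + exists v; split; [apply le_forest_nbr_keep | simpl]; auto.
  - destruct Hs as [l [hlen [hfop hall]]].
    destruct (classic (w = x)) as [->|Hwx].
    + exists (map (fun v => if Nat.eq_dec v y then z else v) l); rewrite length_map.
      split; [auto | split].
      * eapply ForallOrdPairs_map; [exact hfop|]; intros u v _ _ huv; simpl.
        destruct (gd_neq Hg huv) as [hvu _].
        destruct (Nat.eq_dec u y) as [->|hu], (Nat.eq_dec v y) as [->|hv]; auto.
        exfalso; apply (gd_neq Hg huv); auto.
      * intros v' Hv'; apply in_map_iff in Hv'; destruct Hv' as [v [<- Hv]].
        destruct (hall v Hv) as [hn hc]; simpl.
        destruct (Nat.eq_dec v y) as [->|hv].
        -- split; [apply le_forest_nbr_redirect; auto | auto].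
        -- split; [apply le_forest_nbr_keep; tauto | auto].
    + exists l; split; [auto | split].
      * eapply ForallOrdPairs_impl; [|exact hfop]; simpl; auto.
      * intros v Hv; destruct (hall v Hv) as [hn hc].
        split; [apply le_forest_nbr_keep; tauto | simpl; auto].
Qed.

Lemma le_forest_merged_y : merged F' g y.
Proof.
  destruct le_merged_child as [Hp _]; split; auto; rewrite Hp; simpl.
  intros R [[_ h]|[(_ & _ & h & _)|(_ & _ & h & _)]]; auto.
  apply le_x_ne_y; auto.
Qed.

Lemma le_forest_decreases : vec_lt measure_len (measure F' g) (measure F g).
Proof.
  destruct (nbr_nodes Hg Hny) as [Hx Hy].
  assert (Hmx : ~ merged F g x) by (apply not_indirectly_blocked_unmerged; auto).
  assert (Hmz : ~ merged F g z) by (eapply nbr_unmerged; eauto).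
  assert (Hext : forall w, extends_at F g F' g w).
  { intros w; split; [|split].
    - intros [hr hm]; split; auto; simpl.
      intros R [[h _]|[(_ & h1 & h2 & _)|(_ & h1 & h2 & _)]]; [eapply hm; eauto | |];
        subst w; [apply Hmx | apply Hmz]; split; auto.
    - intros C h; simpl; auto.
    - intros Hmw D; apply le_forest_satisfied; intros ->; apply Hmw, le_forest_merged_y. }
  apply (measure_decreases (new := [])) with (k := depth g y) (w0 := y); auto.
  - rewrite app_nil_r; auto.
  - intros w [].
  - intros w _; apply progress_mono; auto.
  - apply progress_lt_merge; [|apply le_forest_merged_y].
    destruct le_merged_child as [Hp [R' HR']]; intros [_ hm]; rewrite Hp in hm; eapply hm; eauto.
  - apply (gd_depth_le Hg Hy).
Qed.

End LeMerge.

Definition ler_forest (F : forest) (y z : nat) : forest :=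
  MkForest (f_node F) (f_root F)
    (fun u D => (f_lab F u D \/ (u = z /\ f_lab F y D)) /\ u <> y)
    (fun u v => ((f_edge F u v \/ (u = z /\ f_edge F y v)) \/
                 (v = z /\ (f_edge F u y \/ (u = z /\ f_edge F y y)))) /\ u <> y /\ v <> y)
    (fun u v R => ((f_elab F u v R \/ (u = z /\ f_elab F y v R)) \/
                   (v = z /\ (f_elab F u y R \/ (u = z /\ f_elab F y y R)))) /\ u <> y /\ v <> y)
    (fun u v => f_neq F u v \/ (v = z /\ f_neq F u y) \/ (u = z /\ f_neq F v y))
    (fun u v => f_eq F u v \/ (u = y /\ v = z) \/ (u = z /\ v = y)).

Definition ler_guide (g : guide) (y z : nat) : guide :=
  Guide (img g) (fun w => if Nat.eq_dec (parent g w) y then z else parent g w)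
        (depth g) (nodes g) (y :: removed g).

Section RootMerge.
Variables (F : forest) (g : guide) (y z : nat).
Hypothesis Hg : guided F g.
Hypothesis Hy : ind_in A y.
Hypothesis Hz : ind_in A z.
Hypothesis Hyz : y <> z.
Hypothesis Hyr : ~ In y (removed g).
Hypothesis Himg : img g y = img g z.

Lemma ler_forest_guided : ~ In z (removed g) -> guided (ler_forest F y z) (ler_guide g y z).
Proof.
  intros Hzr; pose proof Hg as Hg'; destruct Hg'; constructor; simpl; auto.
  - intros w D [[h|[-> h]] hw]; destruct (gd_lab0 _ _ h); rewrite <- ?Himg; auto.
  - intros u v R [[[h|[-> h]]|[-> [h|[-> h]]]] [hu hv]];
      destruct (gd_elab0 _ _ _ h) as [e1 e2]; rewrite <- ?Himg; tauto.
  - intros u v [[[h|[-> h]]|[-> [h|[-> h]]]] _]; destruct (gd_edge0 _ _ h); auto.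
  - intros u v [h|[[-> h]|[-> h]]]; destruct (gd_neq0 _ _ h) as (a & b & c & d);
      rewrite <- ?Himg; repeat split; auto.
  - intros u v [[[h|[-> h]]|[-> [h|[-> h]]]] [hu hv]] Hr;
      destruct (gd_edge_to_root0 _ _ h ltac:(auto)) as [a [R b]]; split; auto; exists R; tauto.
  - intros u v [[[h|[-> h]]|[-> [h|[-> h]]]] [hu hv]] Hr; try contradiction.
    + rewrite <- (gd_edge_to_nonroot0 _ _ h Hr); destruct (Nat.eq_dec u y); congruence.
    + rewrite <- (gd_edge_to_nonroot0 _ _ h Hr); destruct (Nat.eq_dec y y); congruence.
  - intros v Hv Hr; destruct (gd_parent0 v Hv Hr) as [e d].
    assert (Hvy : v <> y) by (intros ->; auto).
    destruct (Nat.eq_dec (parent g v) y) as [e'|e'].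
    + rewrite e' in e, d; rewrite d, (gd_root_depth0 y Hy), (gd_root_depth0 z Hz).
      split; [split; [left; right; auto | split; congruence] | auto].
    + split; [split; [left; left; auto | split; congruence] | auto].
  - intros d [<-|Hd].
    + repeat split; auto; intros; intuition congruence.
    + destruct (gd_removed0 d Hd) as (h1 & h2 & h3); split; [auto | split].
      * intros D [[h|[-> _]] _]; [eapply h2; eauto | auto].
      * intros u; split; intros [[[h|[-> h]]|[-> [h|[-> h]]]] _];
          solve [eapply (proj1 (h3 _)); eauto | eapply (proj2 (h3 _)); eauto | auto].
Qed.

Lemma ler_forest_decreases :
  vec_lt measure_len (measure (ler_forest F y z) (ler_guide g y z)) (measure F g).
Proof.
  exists 0; split; [unfold measure_len; lia|]; split; [|intros; lia].
  simpl; unfold live_roots; simpl; apply count_sat_lt.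
  - intros r _ h1 h2; apply h1; right; auto.
  - exists y; split; [apply ind_in_abox_individuals; auto | simpl; tauto].
Qed.

End RootMerge.

Lemma same_image_nbrs F g x n S0 C : guided F g -> f_lab F x (CAtMost n S0 C) ->
  card_gt n (fun w => S_nbr H F S0 x w /\ f_lab F w C) ->
  exists a b, a <> b /\ S_nbr H F S0 x a /\ f_lab F a C /\ S_nbr H F S0 x b /\ f_lab F b C /\
    img g a = img g b.
Proof.
  intros Hg Hl [l [Hnd [Hlen Hall]]].
  assert (Hnnd : ~ NoDup (map (img g) l))
    by (intros h; pose proof (atmost_nbrs_length_le Hg Hl Hall h); lia).
  destruct (map_not_NoDup _ _ Hnd Hnnd) as (a & b & Ha & Hb & Hab & Himg).
  exists a, b; destruct (Hall a Ha), (Hall b Hb); repeat split; auto.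
Qed.

Lemma merge_orientation F g a b : guided F g -> a <> b -> ~ (ind_in A a /\ ind_in A b) ->
  exists y z, ((y = a /\ z = b) \/ (y = b /\ z = a)) /\ ~ ind_in A y /\ ~ ancestor F y z.
Proof.
  intros Hg Hab Hr; destruct (classic (ind_in A a)) as [Ha|Ha].
  - assert (Hb : ~ ind_in A b) by tauto.
    exists b, a; split; [right; auto | split; [auto|]].
    intros Hba; apply Hb; eapply ancestor_of_root; eauto.
  - destruct (classic (ancestor F a b)) as [Hanc|Hanc]; [|exists a, b; auto].
    exists b, a; split; [right; auto | split].
    + intros Hb; apply Ha; eapply ancestor_of_root; eauto.
    + intros Hba; apply (ancestor_irrefl Hg Ha); eapply t_trans; eauto.
Qed.

Lemma atmost_rule_step F g x n S0 C : guided F g -> f_lab F x (CAtMost n S0 C) ->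
  ~ indirectly_blocked F x -> card_gt n (fun w => S_nbr H F S0 x w /\ f_lab F w C) ->
  has_guided_step F g.
Proof.
  intros Hg Hl Hib Hcard.
  destruct (same_image_nbrs Hg Hl Hcard) as (a & b & Hab & Hna & Hca & Hnb & Hcb & Himg).
  assert (Hneq : forall u v, img g u = img g v -> ~ f_neq F u v)
    by (intros u v e h; apply (gd_neq Hg h), e).
  pose proof (gd_root Hg) as Hroot.
  destruct (classic (ind_in A a /\ ind_in A b)) as [[Hra Hrb]|Hnr].
  - exists (ler_forest F a b), (ler_guide g a b); split; [|split].
    + apply (r_ler TN H F x n S0 C); auto; rewrite Hroot; auto.
    + apply ler_forest_guided; eauto using lab_not_removed.
    + apply ler_forest_decreases; eauto using lab_not_removed.
  - destruct (merge_orientation Hg Hab Hnr) as (y & z & Hyz & Hyr & Hanc).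
    assert (HH : S_nbr H F S0 x y /\ S_nbr H F S0 x z /\ y <> z /\ ~ f_neq F y z /\
                 f_lab F y C /\ f_lab F z C /\ img g y = img g z)
      by (destruct Hyz as [[-> ->]|[-> ->]]; repeat split; auto).
    destruct HH as (h1 & h2 & h3 & h4 & h5 & h6 & h7).
    exists (le_forest F x y z), g; split; [|split].
    + apply (r_le TN H F x n S0 C); auto; rewrite Hroot; auto.
    + eapply (le_forest_guided (x := x) (y := y) (z := z)); eauto using lab_not_removed.
    + eapply (le_forest_decreases (x := x) (y := y) (z := z)); eauto.
Qed.

Lemma two_root_nbrs_root F g S0 x y z : guided F g -> S_nbr H F S0 x y -> S_nbr H F S0 x z ->
  y <> z -> ind_in A y -> ind_in A z -> ind_in A x.
Proof.
  intros Hg Hny Hnz Hyz Hy Hz; apply NNPP; intros Hx.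
  assert (Hpar : forall r, S_nbr H F S0 x r -> ind_in A r -> r = parent g x).
  { intros r [[R [He _]]|[R [He _]]] Hr; apply (gd_elab Hg), proj1 in He.
    - exfalso; apply Hx, (gd_edge_to_root Hg He Hr).
    - apply (gd_edge_to_nonroot Hg He Hx). }
  apply Hyz; rewrite (Hpar y), (Hpar z); auto.
Qed.

Lemma guided_step_exists F g F'' : guided F g -> rule_step TN H F F'' -> has_guided_step F g.
Proof.
  intros Hg Hs; pose proof (gd_root Hg) as Hroot.
  destruct Hs as [x C1 C2 hl hib hn | x C1 C2 D hl hib hn1 hn2 _ | x S0 C y hl hnb hnex _
                 | x S0 C y hl hib hn hnot | x S0 C R y hl hib htr hsub hn hnot
                 | x n S0 C y D hl hib hn hn1 hn2 _ | x n S0 C ys hl hnb hnot _ _ _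
                 | x n S0 C y z hl hib hcard _ _ _ _ _ _ _ _
                 | x n S0 C y z hl hcard hny hnz hyz hry hrz _ _ _].
  - eapply and_rule_step; eauto.
  - eapply or_rule_step; eauto.
  - eapply ex_rule_step; eauto.
  - eapply all_rule_step; eauto.
  - eapply allplus_rule_step; eauto.
  - eapply choose_rule_step; eauto.
  - eapply ge_rule_step; eauto.
  - eapply atmost_rule_step; eauto.
  - eapply atmost_rule_step; eauto.
    rewrite Hroot in hry, hrz.
    apply (root_not_indirectly_blocked Hg), (two_root_nbrs_root Hg hny hnz hyz hry hrz).
Qed.

Lemma guided_run F g : guided F g ->
  exists F', alg_run TN H F F' /\ complete TN H F' /\ clash_free H F'.
Proof.
  revert F g.
  enough (Hwf : forall p : forest * guide, guided (fst p) (snd p) ->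
            exists F', alg_run TN H (fst p) F' /\ complete TN H F' /\ clash_free H F')
    by (intros F g; apply (Hwf (F, g))).
  intros p; induction p as [[F g] IH] using
    (well_founded_induction (wf_inverse_image _ _ _ (fun q => measure (fst q) (snd q))
                                                (vec_lt_wf measure_len))).
  simpl in *; intros Hg.
  destruct (classic (complete TN H F)) as [Hc|Hc].
  - exists F; split; [apply rt_refl | split; auto]; eapply guided_clash_free; eauto.
  - apply NNPP in Hc; destruct Hc as [F'' Hs].
    destruct (guided_step_exists Hg Hs) as (F' & g' & Hs' & Hg' & Hlt).
    destruct (IH (F', g') Hlt Hg') as (Ff & Hrun & Hcomp & Hcf).
    exists Ff; split; auto.
    eapply rt_trans; [apply rt_step; split; [eapply guided_clash_free|]|]; eauto.
Qed.

End GuidedRun.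

Theorem lemma10 (TN : nat -> Prop) (H : role_hierarchy) (A : abox) :
  abox_nnf A -> abox_shiq TN H A ->
  has_tableau TN H A ->
  exists F : forest,
    alg_run TN H (init_forest A) F /\ complete TN H F /\ clash_free H F.
Proof.
  intros Hnnf _ (T & L & E & I & _ & Hclos & HRA & P1 & P2 & P3 & P4 & P5 & P6 & P7 & P8 &
                 P9 & P10 & P11 & P12 & P13 & P14).
  eapply guided_run, init_guided; eauto.
Qed.
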